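(* Let $\mathcal X,\mathcal Y$ be finite or countably infinite, $n\in\mathbb N$, and for $i=1,\dots,n$ let $P_{X_i},Q_{X_i}$ be probability mass functions with full support on $\mathcal X$ and $W_{Y_i|X_i}$ stochastic transformations from $\mathcal X$ to $\mathcal Y$. Let $P_{X^n}=\prod_iP_{X_i}$, $Q_{X^n}=\prod_iQ_{X_i}$, $W_{Y^n|X^n}(\underline y|\underline x)=\prod_iW_{Y_i|X_i}(y_i|x_i)$, and for $\lambda\in[0,1]$ let $R^{(\lambda)}_{X^n}(\underline x)=\prod_{i=1}^n(\lambda P_{X_i}(x_i)+(1-\lambda)Q_{X_i}(x_i))$. Let $R_{Y^n}^{(\lambda)}:=R_{X^n}^{(\lambda)}W_{Y^n|X^n}$, $Q_{Y^n}:=Q_{X^n}W_{Y^n|X^n}$, $P_{Y_i}:=P_{X_i}W_{Y_i|X_i}$, $Q_{Y_i}:=Q_{X_i}W_{Y_i|X_i}$. Let $f:(0,\infty)\to\mathbb R$ be convex and twice differentiable with $f(1)=0$, and let $$\xi_1(n,\lambda):=\prod_{i=1}^n\Big(1-\lambda+\lambda\inf_{x}\tfrac{P_{X_i}(x)}{Q_{X_i}(x)}\Big),\qquad \xi_2(n,\lambda):=\prod_{i=1}^n\Big(1-\lambda+\lambda\sup_x\tfrac{P_{X_i}(x)}{Q_{X_i}(x)}\Big).$$ Then: (a) for all $\lambda\in[0,1]$, $$D_f(R^{(\lambda)}_{X^n}\|Q_{X^n})-D_f(R^{(\lambda)}_{Y^n}\|Q_{Y^n})\ge c_f(\xi_1(n,\lambda),\xi_2(n,\lambda))\Big[\prod_{i=1}^n(1+\lambda^2\chi^2(P_{X_i}\|Q_{X_i}))-\prod_{i=1}^n(1+\lambda^2\chi^2(P_{Y_i}\|Q_{Y_i}))\Big]$$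 $$\ge c_f(\xi_1(n,\lambda),\xi_2(n,\lambda))\,\lambda^2\sum_{i=1}^n[\chi^2(P_{X_i}\|Q_{X_i})-\chi^2(P_{Y_i}\|Q_{Y_i})]\ge0;$$ (b) for all $\lambda\in[0,1]$, $$D_f(R^{(\lambda)}_{X^n}\|Q_{X^n})-D_f(R^{(\lambda)}_{Y^n}\|Q_{Y^n})\le e_f(\xi_1(n,\lambda),\xi_2(n,\lambda))\Big[\prod_{i=1}^n(1+\lambda^2\chi^2(P_{X_i}\|Q_{X_i}))-\prod_{i=1}^n(1+\lambda^2\chi^2(P_{Y_i}\|Q_{Y_i}))\Big];$$ (c) if $f$ has a continuous second derivative at $1$ and $\sup_x P_{X_i}(x)/Q_{X_i}(x)<\infty$ for all $i$, then $$\lim_{\lambda\to0^+}\frac{D_f(R^{(\lambda)}_{X^n}\|Q_{X^n})-D_f(R^{(\lambda)}_{Y^n}\|Q_{Y^n})}{\lambda^2}=\tfrac12f''(1)\sum_{i=1}^n[\chi^2(P_{X_i}\|Q_{X_i})-\chi^2(P_{Y_i}\|Q_{Y_i})],$$ and the lower bounds in (a) and the upper bound in (b), divided by $\lambda^2$, also converge to this limit as $\lambda\to0^+$.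
   Context: $D_f(P\|Q):=\sum_xQ(x)f(P(x)/Q(x))$ is the $f$-divergence and $\chi^2(P\|Q):=\sum_x(P(x)-Q(x))^2/Q(x)$. For $\xi_1\le1\le\xi_2$, with $\mathcal I(\xi_1,\xi_2):=[\xi_1,\xi_2]\cap(0,\infty)$, define $c_f(\xi_1,\xi_2):=\tfrac12\inf_{t\in\mathcal I(\xi_1,\xi_2)}f''(t)$ and $e_f(\xi_1,\xi_2):=\tfrac12\sup_{t\in\mathcal I(\xi_1,\xi_2)}f''(t)$. *)

From Stdlib Require Import Reals Lra Lia List ClassicalEpsilon.
Open Scope R_scope.

Fixpoint lsum {T : Type} (g : T -> R) (l : list T) : R :=
  match l with nil => 0 | x :: l' => g x + lsum g l' end.

Definition has_sum {T : Type} (g : T -> R) (s : R) : Prop :=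
  forall eps, 0 < eps -> exists F0 : list T, NoDup F0 /\
    forall F : list T, NoDup F -> incl F0 F -> Rabs (lsum g F - s) < eps.

Definition summable {T : Type} (g : T -> R) : Prop := exists s, has_sum g s.

(* The sum (meaningful when summable). *)
Definition Sum {T : Type} (g : T -> R) : R := epsilon (inhabits 0) (has_sum g).

(* supremum in (-oo, +oo]; None stands for +oo *)
Definition Sup (E : R -> Prop) : option R :=
  if excluded_middle_informative (bound E)
  then Some (epsilon (inhabits 0) (is_lub E)) else None.
(* infimum (used only for sets that are nonempty and bounded below) *)
Definition Inf (E : R -> Prop) : R :=
  - epsilon (inhabits 0) (is_lub (fun v => E (- v))).

Fixpoint prodn (n : nat) (a : nat -> R) : R :=
  match n with O => 1 | S m => prodn m a * a m end.
Fixpoint sumn (n : nat) (a : nat -> R) : R :=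
  match n with O => 0 | S m => sumn m a + a m end.
(* product of extended values in (0,+oo]; None = +oo *)
Fixpoint oprodn (n : nat) (a : nat -> option R) : option R :=
  match n with
  | O => Some 1
  | S m => match oprodn m a, a m with
           | Some u, Some v => Some (u * v)
           | _, _ => None end
  end.

Definition countable (T : Type) : Prop :=
  exists e : T -> nat, forall a b, e a = e b -> a = b.

Definition pmf_full {T : Type} (P : T -> R) : Prop :=
  (forall x, 0 < P x) /\ has_sum P 1.

(* stochastic transformation W(y|x) = W x y *)
Definition stochastic {A B : Type} (W : A -> B -> R) : Prop :=
  forall x, (forall y, 0 <= W x y) /\ has_sum (W x) 1.

Definition push {A B : Type} (P : A -> R) (W : A -> B -> R) : B -> R :=
  fun y => Sum (fun x => P x * W x y).

Definition vec (T : Type) (n : nat) : Type := {l : list T | length l = n}.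

Fixpoint prodi {T : Type} (p : nat -> T -> R) (k : nat) (l : list T) : R :=
  match l with nil => 1 | x :: l' => p k x * prodi p (S k) l' end.

Fixpoint prodW {A B : Type} (w : nat -> A -> B -> R) (k : nat)
    (xs : list A) (ys : list B) : R :=
  match xs, ys with
  | x :: xs', y :: ys' => w k x y * prodW w (S k) xs' ys'
  | _, _ => 1
  end.

Definition prodP {T : Type} (n : nat) (p : nat -> T -> R) : vec T n -> R :=
  fun x => prodi p 0 (proj1_sig x).

Definition prodCh {A B : Type} (n : nat) (w : nat -> A -> B -> R)
  : vec A n -> vec B n -> R :=
  fun x y => prodW w 0 (proj1_sig x) (proj1_sig y).

(* Q(x) f(P(x)/Q(x)), with the convention 0 f(0/0) = 0 (in the theorem,
   Q(x) = 0 only occurs together with P(x) = 0). *)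
Definition Df_term {T : Type} (f : R -> R) (P Q : T -> R) (x : T) : R :=
  if Req_dec_T (Q x) 0 then 0 else Q x * f (P x / Q x).
Definition Df {T : Type} (f : R -> R) (P Q : T -> R) : R := Sum (Df_term f P Q).

Definition chi2_term {T : Type} (P Q : T -> R) (x : T) : R :=
  if Req_dec_T (Q x) 0 then 0 else (P x - Q x) ^ 2 / Q x.
Definition chi2 {T : Type} (P Q : T -> R) : R := Sum (chi2_term P Q).

(* membership in I(xi1,xi2) = [xi1,xi2] ∩ (0,oo); xi2 = None means +oo *)
Definition inI (xi1 : R) (xi2 : option R) (t : R) : Prop :=
  0 < t /\ xi1 <= t /\ match xi2 with Some b => t <= b | None => True end.

Definition f2_values (f2 : R -> R) (xi1 : R) (xi2 : option R) : R -> Prop :=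
  fun v => exists t, inI xi1 xi2 t /\ v = f2 t.

Definition c_f (f2 : R -> R) (xi1 : R) (xi2 : option R) : R :=
  / 2 * Inf (f2_values f2 xi1 xi2).
Definition e_f (f2 : R -> R) (xi1 : R) (xi2 : option R) : option R :=
  match Sup (f2_values f2 xi1 xi2) with Some s => Some (/ 2 * s) | None => None end.

Definition ratio_set {T : Type} (P Q : T -> R) : R -> Prop :=
  fun v => exists x, v = P x / Q x.

Definition xi1 {T : Type} (n : nat) (PX QX : nat -> T -> R) (lam : R) : R :=
  prodn n (fun i => 1 - lam + lam * Inf (ratio_set (PX i) (QX i))).

(* with the convention 0 * (+oo) = 0 *)
Definition xi2 {T : Type} (n : nat) (PX QX : nat -> T -> R) (lam : R) : option R :=
  oprodn n (fun i => match Sup (ratio_set (PX i) (QX i)) with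
                     | Some s => Some (1 - lam + lam * s)
                     | None => if Req_dec_T lam 0 then Some 1 else None
                     end).

Definition lim0plus (g : R -> R) (L : R) : Prop :=
  forall eps, 0 < eps -> exists delta, 0 < delta /\
    forall lam, 0 < lam < delta -> Rabs (g lam - L) < eps.
Definition lim0plus_opt (g : R -> option R) (L : R) : Prop :=
  forall eps, 0 < eps -> exists delta, 0 < delta /\
    forall lam, 0 < lam < delta -> exists v, g lam = Some v /\ Rabs (v - L) < eps.

Definition convex_pos (f : R -> R) : Prop :=
  forall x y t, 0 < x -> 0 < y -> 0 <= t <= 1 ->
    f (t * x + (1 - t) * y) <= t * f x + (1 - t) * f y.

From Stdlib Require Import Reals Lra Lia List ClassicalEpsilon Classical.
Open Scope R_scope.

(* Fix [lam] and let [I] be the interval [[xi1, xi2]]: it contains 1 and every likelihood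
   ratio [R_{X^n}/Q_{X^n}], hence also every output ratio [R_{Y^n}/Q_{Y^n}], which is an
   average of input ratios.  If [kap <= f''/2] on [I], then [g = f - kap t^2] is convex on [I],
   and data processing for [g] (which only needs convexity on the range of the ratios) gives
     [D_f(R_X||Q_X) - D_f(R_Y||Q_Y) >= kap (sum R_X^2/Q_X - sum R_Y^2/Q_Y)];
   for [kap >= f''/2] on [I] the same argument applied to [-g] gives the reverse bound.
   Because the mixture, [Q] and the channel are all products, [sum R^2/Q] factorizes as
   [prod_i (1 + lam^2 chi^2(P_i||Q_i))] on both sides, and data processing for [chi^2]
   compares the product form with the sum form.  As [lam -> 0+], [I] shrinks to [{1}], so
   [c_f] and [e_f] both tend to [f''(1)/2] and the two bounds squeeze the gap. *)

(** * Unconditional sums *)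

Definition classical_eq_dec {T : Type} (a b : T) : {a = b} + {a <> b} :=
  excluded_middle_informative (a = b).

Lemma incl_nodup_app_l {T} (l1 l2 : list T) : incl l1 (nodup classical_eq_dec (l1 ++ l2)).
Proof. intros x Hx; apply nodup_In, in_or_app; auto. Qed.

Lemma incl_nodup_app_r {T} (l1 l2 : list T) : incl l2 (nodup classical_eq_dec (l1 ++ l2)).
Proof. intros x Hx; apply nodup_In, in_or_app; auto. Qed.

Section FiniteSums.
Context {T : Type}.
Implicit Types (g h : T -> R) (l : list T).

Lemma lsum_app g l1 l2 : lsum g (l1 ++ l2) = lsum g l1 + lsum g l2.
Proof. induction l1; simpl; [ring | rewrite IHl1; ring]. Qed.

Lemma lsum_ext g h l : (forall x, g x = h x) -> lsum g l = lsum h l.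
Proof. intros H; induction l; simpl; [auto | rewrite H, IHl; auto]. Qed.

Lemma lsum_plus g h l : lsum (fun x => g x + h x) l = lsum g l + lsum h l.
Proof. induction l; simpl; [ring | rewrite IHl; ring]. Qed.

Lemma lsum_scal g a l : lsum (fun x => a * g x) l = a * lsum g l.
Proof. induction l; simpl; [ring | rewrite IHl; ring]. Qed.

Lemma lsum_le g h l : (forall x, g x <= h x) -> lsum g l <= lsum h l.
Proof. intros H; induction l; simpl; [lra | specialize (H a); lra]. Qed.

Lemma lsum_nonneg g l : (forall x, 0 <= g x) -> 0 <= lsum g l.
Proof. intros H; induction l; simpl; [lra | specialize (H a); lra]. Qed.

Lemma lsum_le_incl g l1 l2 : (forall x, 0 <= g x) -> NoDup l1 -> incl l1 l2 ->
  lsum g l1 <= lsum g l2.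
Proof.
  intros Hg H1; revert l2; induction H1 as [|x l1 Hx H1 IH]; intros l2 Hi; simpl.
  - apply lsum_nonneg; auto.
  - assert (Hx2 : In x l2) by (apply Hi; left; auto).
    destruct (in_split _ _ Hx2) as [u [v ->]].
    assert (Hle : lsum g l1 <= lsum g (u ++ v)).
    { apply IH. intros y Hy. assert (Hy' : In y (u ++ x :: v)) by (apply Hi; right; auto).
      apply in_app_or in Hy'. apply in_or_app. destruct Hy' as [H|[H|H]]; auto.
      subst; contradiction. }
    rewrite lsum_app in *; simpl; lra.
Qed.

End FiniteSums.

Lemma lsum_comm {A B} (F : A -> B -> R) la lb :
  lsum (fun b => lsum (fun a => F a b) la) lb = lsum (fun a => lsum (F a) lb) la.
Proof.
  induction la; simpl.
  - induction lb; simpl; auto. rewrite IHlb; ring.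
  - rewrite lsum_plus, IHla; ring.
Qed.

Lemma lsum_list_prod {A B} (p : A -> R) (q : B -> R) la lb :
  lsum (fun z => p (fst z) * q (snd z)) (list_prod la lb) = lsum p la * lsum q lb.
Proof.
  induction la as [|a la IH]; simpl; [ring|].
  rewrite lsum_app, IH.
  assert (Hrow : forall l, lsum (fun z => p (fst z) * q (snd z)) (map (fun y => (a, y)) l)
                           = p a * lsum q l).
  { induction l; simpl; [ring | rewrite IHl; ring]. }
  rewrite Hrow; ring.
Qed.

Lemma NoDup_list_prod {A B} (la : list A) (lb : list B) :
  NoDup la -> NoDup lb -> NoDup (list_prod la lb).
Proof.
  intros Na Nb; induction Na; simpl; [constructor|].
  apply NoDup_app; auto.
  - apply NoDup_map_NoDup_ForallPairs; auto. intros u v _ _ E; inversion E; auto.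
  - intros z Hz Hz2. apply in_map_iff in Hz. destruct Hz as [y [<- _]].
    apply in_prod_iff in Hz2. tauto.
Qed.

Section UnconditionalSums.
Context {T : Type}.
Implicit Types (g h : T -> R).

Lemma has_sum_unique g s t : has_sum g s -> has_sum g t -> s = t.
Proof.
  intros Hs Ht. destruct (Req_dec s t) as [|Hne]; auto; exfalso.
  set (e := Rabs (s - t) / 2).
  assert (He : 0 < e) by (unfold e; assert (s - t <> 0) by lra; apply Rabs_pos_lt in H; lra).
  destruct (Hs e He) as [F1 [_ H1]]. destruct (Ht e He) as [F2 [_ H2]].
  set (F := nodup classical_eq_dec (F1 ++ F2)).
  specialize (H1 F (NoDup_nodup _ _) (incl_nodup_app_l _ _)).
  specialize (H2 F (NoDup_nodup _ _) (incl_nodup_app_r _ _)).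
  assert (Rabs (s - t) <= Rabs (lsum g F - s) + Rabs (lsum g F - t)).
  { replace (s - t) with (-(lsum g F - s) + (lsum g F - t)) by ring.
    eapply Rle_trans; [apply Rabs_triang|]. rewrite Rabs_Ropp; lra. }
  unfold e in *; lra.
Qed.

Lemma Sum_eq g s : has_sum g s -> Sum g = s.
Proof. intros H. unfold Sum. apply (has_sum_unique g); auto. apply epsilon_spec; eauto. Qed.

Lemma has_sum_Sum g : summable g -> has_sum g (Sum g).
Proof. intros [s H]. rewrite (Sum_eq g s H); auto. Qed.

Lemma has_sum_ext g h s : (forall x, g x = h x) -> has_sum g s -> has_sum h s.
Proof.
  intros E H eps He. destruct (H eps He) as [F0 [N0 H0]]. exists F0; split; auto.
  intros F NF IF. rewrite <- (lsum_ext g h F E). auto.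
Qed.

Lemma has_sum_zero : has_sum (fun _ : T => 0) 0.
Proof.
  intros eps He. exists nil; split; [constructor|]. intros F _ _.
  rewrite (lsum_ext _ (fun x => 0 * 0)), lsum_scal by (intros; ring).
  rewrite Rmult_0_l, Rminus_0_r, Rabs_R0; lra.
Qed.

Lemma has_sum_plus g h s t : has_sum g s -> has_sum h t ->
  has_sum (fun x => g x + h x) (s + t).
Proof.
  intros Hs Ht eps He.
  destruct (Hs (eps/2) ltac:(lra)) as [F1 [_ H1]]. destruct (Ht (eps/2) ltac:(lra)) as [F2 [_ H2]].
  exists (nodup classical_eq_dec (F1 ++ F2)); split; [apply NoDup_nodup|].
  intros F NF IF.
  specialize (H1 F NF (incl_tran (incl_nodup_app_l _ _) IF)).
  specialize (H2 F NF (incl_tran (incl_nodup_app_r _ _) IF)).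
  rewrite lsum_plus.
  replace (lsum g F + lsum h F - (s + t)) with ((lsum g F - s) + (lsum h F - t)) by ring.
  eapply Rle_lt_trans; [apply Rabs_triang|]. lra.
Qed.

Lemma has_sum_scal g a s : has_sum g s -> has_sum (fun x => a * g x) (a * s).
Proof.
  intros Hs eps He.
  assert (Ha : 0 < Rabs a + 1) by (pose proof (Rabs_pos a); lra).
  destruct (Hs (eps / (Rabs a + 1)) ltac:(apply Rdiv_lt_0_compat; lra)) as [F0 [N0 H0]].
  exists F0; split; auto. intros F NF IF. specialize (H0 F NF IF).
  rewrite lsum_scal. replace (a * lsum g F - a * s) with (a * (lsum g F - s)) by ring.
  rewrite Rabs_mult.
  apply (Rmult_lt_compat_r (Rabs a + 1)) in H0; [|lra].
  replace (eps / (Rabs a + 1) * (Rabs a + 1)) with eps in H0 by (field; lra).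
  pose proof (Rabs_pos a). pose proof (Rabs_pos (lsum g F - s)). nra.
Qed.

Lemma has_sum_minus g h s t : has_sum g s -> has_sum h t ->
  has_sum (fun x => g x - h x) (s - t).
Proof.
  intros Hs Ht. apply (has_sum_ext (fun x => g x + (-1) * h x)); [intros; ring|].
  replace (s - t) with (s + (-1) * t) by ring. apply has_sum_plus, has_sum_scal; auto.
Qed.

Lemma has_sum_scal_1 g a : has_sum g 1 -> has_sum (fun x => a * g x) a.
Proof. intros H. pose proof (has_sum_scal g a 1 H) as H1. rewrite Rmult_1_r in H1; auto. Qed.

Lemma has_sum_lower_approx g s eps : has_sum g s -> 0 < eps ->
  exists F, NoDup F /\ s - eps < lsum g F.
Proof.
  intros H He. destruct (H eps He) as [F0 [N0 H0]]. exists F0; split; auto.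
  specialize (H0 F0 N0 (incl_refl _)). apply Rabs_def2 in H0. lra.
Qed.

Lemma lsum_le_has_sum g s F : (forall x, 0 <= g x) -> has_sum g s -> NoDup F ->
  lsum g F <= s.
Proof.
  intros Hg Hs NF. apply Rnot_lt_le; intro Hlt.
  destruct (Hs (lsum g F - s) ltac:(lra)) as [F0 [_ H0]].
  set (F' := nodup classical_eq_dec (F0 ++ F)).
  specialize (H0 F' (NoDup_nodup _ _) (incl_nodup_app_l _ _)). apply Rabs_def2 in H0.
  pose proof (lsum_le_incl g F F' Hg NF (incl_nodup_app_r _ _)). lra.
Qed.

Lemma has_sum_nonneg g s : (forall x, 0 <= g x) -> has_sum g s -> 0 <= s.
Proof. intros Hg Hs. apply (lsum_le_has_sum g s nil Hg Hs). constructor. Qed.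

Lemma has_sum_ge_term g s x : (forall x, 0 <= g x) -> has_sum g s -> g x <= s.
Proof.
  intros Hg Hs. pose proof (lsum_le_has_sum g s (x :: nil) Hg Hs) as H.
  simpl in H. assert (NoDup (x :: nil)) by (repeat constructor; auto). specialize (H H0); lra.
Qed.

Lemma has_sum_of_lub g s : (forall x, 0 <= g x) ->
  (forall F, NoDup F -> lsum g F <= s) ->
  (forall eps, 0 < eps -> exists F, NoDup F /\ s - eps < lsum g F) -> has_sum g s.
Proof.
  intros Hg Hup Hlo eps He. destruct (Hlo eps He) as [F0 [N0 H0]]. exists F0; split; auto.
  intros F NF IF. pose proof (lsum_le_incl g F0 F Hg N0 IF). pose proof (Hup F NF).
  apply Rabs_def1; lra.
Qed.

Lemma has_sum_of_bounded g M : (forall x, 0 <= g x) ->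
  (forall F, NoDup F -> lsum g F <= M) -> exists s, has_sum g s /\ s <= M.
Proof.
  intros Hg Hb.
  set (E := fun v => exists F, NoDup F /\ v = lsum g F).
  assert (bE : bound E) by (exists M; intros v [F [NF ->]]; auto).
  assert (nE : exists v, E v) by (exists 0; exists nil; split; [constructor | auto]).
  destruct (completeness E bE nE) as [m [Hm1 Hm2]].
  exists m; split.
  - apply has_sum_of_lub; auto.
    + intros F NF. apply Hm1. exists F; auto.
    + intros eps He. apply NNPP; intro Hn.
      assert (m <= m - eps); [|lra].
      apply Hm2. intros v [F [NF ->]].
      apply Rnot_lt_le. intro; apply Hn. exists F; auto.
  - apply Hm2. intros v [F [NF ->]]; auto.
Qed.

Lemma has_sum_le g h s t : (forall x, g x <= h x) ->
  has_sum g s -> has_sum h t -> s <= t.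
Proof.
  intros Hle Hs Ht. pose proof (has_sum_minus h g t s Ht Hs) as H.
  apply has_sum_nonneg in H; [lra|]. intros x; specialize (Hle x); lra.
Qed.

Lemma has_sum_dominated_nonneg g h t : (forall x, 0 <= g x <= h x) ->
  has_sum h t -> exists s, has_sum g s /\ s <= t.
Proof.
  intros Hd Ht. apply has_sum_of_bounded; [intros x; apply Hd|].
  intros F NF. eapply Rle_trans; [|apply (lsum_le_has_sum h t F)]; auto.
  - apply lsum_le; intros; apply Hd.
  - intros x; specialize (Hd x); lra.
Qed.

(* [g] is split into its positive and negative parts, each dominated by [h]. *)
Lemma summable_dominated g h t : (forall x, Rabs (g x) <= h x) ->
  has_sum h t -> summable g.
Proof.
  intros Hd Ht.
  assert (Hpos : forall x, 0 <= (Rabs (g x) + g x) / 2 <= h x).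
  { intros x; specialize (Hd x); pose proof (Rle_abs (- g x)); rewrite Rabs_Ropp in H;
      pose proof (Rle_abs (g x)); lra. }
  assert (Hneg : forall x, 0 <= (Rabs (g x) - g x) / 2 <= h x).
  { intros x; specialize (Hd x); pose proof (Rle_abs (- g x)); rewrite Rabs_Ropp in H;
      pose proof (Rle_abs (g x)); lra. }
  destruct (has_sum_dominated_nonneg _ h t Hpos Ht) as [s1 [H1 _]].
  destruct (has_sum_dominated_nonneg _ h t Hneg Ht) as [s2 [H2 _]].
  exists (s1 - s2). eapply has_sum_ext; [|apply (has_sum_minus _ _ _ _ H1 H2)].
  intros; simpl; field.
Qed.

Lemma has_sum_inhabited g s : has_sum g s -> s <> 0 -> inhabited T.
Proof.
  intros H Hs. assert (Habs : 0 < Rabs s) by (apply Rabs_pos_lt; auto).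
  destruct (H (Rabs s) Habs) as [[|x F0] [N0 H0]]; [|exact (inhabits x)].
  specialize (H0 nil N0 (incl_refl _)). simpl in H0.
  rewrite Rminus_0_l, Rabs_Ropp in H0. lra.
Qed.

Lemma has_sum_singleton g v0 : (forall x, x = v0) -> has_sum g (g v0).
Proof.
  intros Hu eps He. exists (v0 :: nil); split; [repeat constructor; auto|].
  intros F NF IF.
  assert (F = v0 :: nil) as ->.
  { destruct F as [|a [|b F]].
    - exfalso; apply (IF v0); left; auto.
    - rewrite (Hu a); auto.
    - exfalso. inversion NF; subst. apply H1. left. rewrite (Hu a), (Hu b); auto. }
  simpl. replace (g v0 + 0 - g v0) with 0 by ring. rewrite Rabs_R0; lra.
Qed.

End UnconditionalSums.

Lemma has_sum_lsum {A B} (F : A -> B -> R) (G : B -> R) lb :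
  (forall b, has_sum (fun a => F a b) (G b)) ->
  has_sum (fun a => lsum (F a) lb) (lsum G lb).
Proof.
  intros H; induction lb as [|b0 lb IH]; simpl.
  - apply has_sum_zero.
  - apply (has_sum_plus (fun a => F a b0)); auto.
Qed.

Lemma lsum_has_sum_lower_approx {A B} (F : A -> B -> R) (G : A -> R) la d :
  (forall a b, 0 <= F a b) -> (forall a, has_sum (F a) (G a)) -> 0 < d ->
  exists lb, NoDup lb /\ lsum G la - d < lsum (fun a => lsum (F a) lb) la.
Proof.
  intros HF HG; revert d; induction la as [|a la IH]; intros d Hd; simpl.
  - exists nil; split; [constructor | lra].
  - destruct (has_sum_lower_approx (F a) (G a) (d/2) (HG a) ltac:(lra)) as [lb1 [N1 H1]].
    destruct (IH (d/2) ltac:(lra)) as [lb2 [N2 H2]].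
    set (lb := nodup classical_eq_dec (lb1 ++ lb2)).
    exists lb; split; [apply NoDup_nodup|].
    pose proof (lsum_le_incl (F a) _ lb (HF a) N1 (incl_nodup_app_l _ _)).
    assert (lsum (fun a => lsum (F a) lb2) la <= lsum (fun a => lsum (F a) lb) la).
    { apply lsum_le. intros x. apply lsum_le_incl; auto. apply incl_nodup_app_r. }
    lra.
Qed.

Lemma has_sum_tonelli {A B} (F : A -> B -> R) (G : A -> R) (H : B -> R) s :
  (forall a b, 0 <= F a b) -> (forall a, has_sum (F a) (G a)) -> has_sum G s ->
  (forall b, has_sum (fun a => F a b) (H b)) -> has_sum H s.
Proof.
  intros HF HG Hs HH.
  assert (HHn : forall b, 0 <= H b)
    by (intros b; apply (has_sum_nonneg (fun a => F a b)); [intros; apply HF | apply HH]).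
  apply has_sum_of_lub; auto.
  - intros lb Nlb. apply (has_sum_le _ G _ _ (fun a => lsum_le_has_sum (F a) (G a) lb (HF a) (HG a) Nlb)
                          (has_sum_lsum F H lb HH) Hs).
  - intros eps He.
    destruct (has_sum_lower_approx G s (eps/2) Hs ltac:(lra)) as [la [Nla Hla]].
    destruct (lsum_has_sum_lower_approx F G la (eps/2) HF HG ltac:(lra)) as [lb [Nlb Hlb]].
    exists lb; split; auto.
    rewrite <- lsum_comm in Hlb.
    assert (lsum (fun b => lsum (fun a => F a b) la) lb <= lsum H lb).
    { apply lsum_le. intros b. apply lsum_le_has_sum; auto. }
    lra.
Qed.

Lemma has_sum_prod {A B} (p : A -> R) (q : B -> R) sp sq :
  (forall a, 0 <= p a) -> (forall b, 0 <= q b) -> has_sum p sp -> has_sum q sq ->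
  has_sum (fun z : A * B => p (fst z) * q (snd z)) (sp * sq).
Proof.
  intros Hp Hq Hsp Hsq.
  assert (Psp : 0 <= sp) by (apply (has_sum_nonneg p); auto).
  assert (Psq : 0 <= sq) by (apply (has_sum_nonneg q); auto).
  apply has_sum_of_lub.
  - intros z; apply Rmult_le_pos; auto.
  - intros L NL.
    set (la := nodup classical_eq_dec (map fst L)). set (lb := nodup classical_eq_dec (map snd L)).
    assert (Hsub : lsum (fun z => p (fst z) * q (snd z)) L
                   <= lsum (fun z => p (fst z) * q (snd z)) (list_prod la lb)).
    { apply lsum_le_incl; auto. intros z; apply Rmult_le_pos; auto.
      intros [a b] Hz. apply in_prod_iff. split; apply nodup_In.
      - change a with (fst (a, b)); apply in_map; auto.
      - change b with (snd (a, b)); apply in_map; auto. }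
    rewrite lsum_list_prod in Hsub.
    pose proof (lsum_le_has_sum p sp la Hp Hsp (NoDup_nodup _ _)).
    pose proof (lsum_le_has_sum q sq lb Hq Hsq (NoDup_nodup _ _)).
    pose proof (lsum_nonneg p la Hp). pose proof (lsum_nonneg q lb Hq).
    assert (lsum p la * lsum q lb <= sp * sq) by (apply Rmult_le_compat; auto). lra.
  - intros eps He.
    set (d := eps / (sp + sq + 1)).
    assert (Hd : 0 < d) by (unfold d; apply Rdiv_lt_0_compat; lra).
    assert (Hd2 : d * (sp + sq + 1) = eps) by (unfold d; field; lra).
    destruct (has_sum_lower_approx p sp d Hsp Hd) as [la [Na Ha]].
    destruct (has_sum_lower_approx q sq d Hsq Hd) as [lb [Nb Hb]].
    exists (list_prod la lb); split; [apply NoDup_list_prod; auto|].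
    rewrite lsum_list_prod.
    pose proof (lsum_nonneg p la Hp). pose proof (lsum_nonneg q lb Hq).
    pose proof (lsum_le_has_sum p sp la Hp Hsp Na). pose proof (lsum_le_has_sum q sq lb Hq Hsq Nb).
    set (x := lsum p la) in *. set (y := lsum q lb) in *.
    assert ((sp - x) * sq <= d * sq) by (apply Rmult_le_compat_r; lra).
    assert (x * (sq - y) <= sp * d) by (apply Rmult_le_compat; lra).
    nra.
Qed.

Lemma has_sum_bij {T T'} (e : T' -> T) (g : T -> R) s :
  (forall u v, e u = e v -> u = v) -> (forall x, exists u, e u = x) ->
  has_sum (fun u => g (e u)) s -> has_sum g s.
Proof.
  intros Inj Sur H eps He. destruct (H eps He) as [F0 [N0 H0]].
  exists (map e F0); split.
  - apply NoDup_map_NoDup_ForallPairs; auto. intros u v _ _; apply Inj.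
  - intros F NF IF.
    assert (Hpre : exists F', map e F' = F).
    { clear -Sur. induction F as [|x F [F' E']]; [exists nil; auto|].
      destruct (Sur x) as [u Eu]. exists (u :: F'); simpl; congruence. }
    destruct Hpre as [F' <-].
    assert (IF' : incl F0 F').
    { intros u Hu. assert (Hin : In (e u) (map e F')) by (apply IF; apply in_map; auto).
      apply in_map_iff in Hin. destruct Hin as [v [Ev Hv]]. apply Inj in Ev; subst; auto. }
    specialize (H0 F' (NoDup_map_inv _ _ NF) IF').
    assert (lsum g (map e F') = lsum (fun u => g (e u)) F') as ->; auto.
    clear. induction F'; simpl; auto. rewrite IHF'; auto.
Qed.

(** * Products over coordinates *)

Section ProductSums.
Context {T : Type}.

Fixpoint prod_apply (hs : list (T -> R)) (xs : list T) : R :=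
  match hs, xs with h :: hs', x :: xs' => h x * prod_apply hs' xs' | _, _ => 1 end.

Definition prod_sums (hs : list (T -> R)) : R := fold_right (fun h acc => Sum h * acc) 1 hs.

Lemma vec_eq {n} (v w : vec T n) : proj1_sig v = proj1_sig w -> v = w.
Proof.
  destruct v as [l p], w as [l' p']; simpl; intros ->. f_equal.
  apply Eqdep_dec.UIP_dec, Nat.eq_dec.
Qed.

Lemma vec_length {n} (x : vec T n) : length (proj1_sig x) = n.
Proof. apply (proj2_sig x). Qed.

Definition vcons {n} (a : T) (v : vec T n) : vec T (S n) :=
  exist _ (a :: proj1_sig v) (f_equal S (proj2_sig v)).

Lemma prod_apply_nonneg hs xs : (forall h, In h hs -> forall x, 0 <= h x) ->
  0 <= prod_apply hs xs.
Proof.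
  revert xs; induction hs as [|h hs IH]; intros [|x xs] H; simpl; try lra.
  apply Rmult_le_pos; [apply H; left; auto | apply IH; intros; apply H; right; auto].
Qed.

(* Each vector of length [S n] is [vcons a v] for a unique pair [(a, v)]. *)
Lemma has_sum_prod_apply n hs : length hs = n ->
  (forall h, In h hs -> (forall x, 0 <= h x) /\ summable h) ->
  has_sum (fun x : vec T n => prod_apply hs (proj1_sig x)) (prod_sums hs).
Proof.
  revert hs; induction n as [|n IH]; intros hs Hl Hh.
  - destruct hs; [|discriminate]. simpl.
    set (v0 := exist (fun l : list T => length l = 0%nat) nil eq_refl).
    apply (has_sum_singleton (fun _ : vec T 0 => 1) v0).
    intros [l p]. apply vec_eq. destruct l; [auto | discriminate].
  - destruct hs as [|h hs]; [discriminate|]. injection Hl as Hl.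
    destruct (Hh h (or_introl eq_refl)) as [Hh0 Hh1].
    apply (has_sum_bij (fun z : T * vec T n => vcons (fst z) (snd z))).
    + intros [a v] [b w] E. injection E as -> E. f_equal. apply vec_eq; auto.
    + intros [[|a l] Hq]; [discriminate|]. injection Hq as Hl'.
      exists (a, exist _ l Hl'). apply vec_eq; auto.
    + apply (has_sum_prod h (fun v : vec T n => prod_apply hs (proj1_sig v))); auto.
      * intros v. apply prod_apply_nonneg. intros h' Hi; apply Hh; right; auto.
      * apply has_sum_Sum; auto.
      * apply IH; auto. intros h' Hi; apply Hh; right; auto.
Qed.


End ProductSums.

Section IndexedProducts.

Lemma prodn_S_shift m (a : nat -> R) : prodn (S m) a = a 0%nat * prodn m (fun i => a (S i)).
Proof. revert a; induction m; intros a; simpl in *; [ring | rewrite IHm; ring]. Qed.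

Lemma prodn_ext m (a b : nat -> R) : (forall i, (i < m)%nat -> a i = b i) -> prodn m a = prodn m b.
Proof. induction m; simpl; intros H; auto. rewrite IHm by (intros; apply H; lia). rewrite H by lia; auto. Qed.


Lemma sumn_minus m (a b : nat -> R) : sumn m (fun i => a i - b i) = sumn m a - sumn m b.
Proof. induction m; simpl; [ring | rewrite IHm; ring]. Qed.

Lemma prodn_1 m : prodn m (fun _ => 1) = 1.
Proof. induction m; simpl; auto. rewrite IHm; ring. Qed.

Lemma prodn_nonneg m (a : nat -> R) : (forall i, (i < m)%nat -> 0 <= a i) -> 0 <= prodn m a.
Proof. induction m; simpl; intros H; [lra|]. apply Rmult_le_pos; [apply IHm; auto | apply H; lia]. Qed.

Lemma prodn_pos m (a : nat -> R) : (forall i, (i < m)%nat -> 0 < a i) -> 0 < prodn m a.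
Proof. induction m; simpl; intros H; [lra|]. apply Rmult_lt_0_compat; [apply IHm; auto | apply H; lia]. Qed.

Lemma prodn_ge_1 m (a : nat -> R) : (forall i, (i < m)%nat -> 1 <= a i) -> 1 <= prodn m a.
Proof.
  induction m; simpl; intros H; [lra|].
  assert (1 <= prodn m a) by (apply IHm; auto). assert (1 <= a m) by (apply H; lia). nra.
Qed.

Lemma prodn_le_1 m (a : nat -> R) : (forall i, (i < m)%nat -> 0 <= a i <= 1) -> prodn m a <= 1.
Proof.
  induction m; simpl; intros H; [lra|].
  assert (prodn m a <= 1) by (apply IHm; auto).
  assert (0 <= prodn m a) by (apply prodn_nonneg; intros; apply H; lia).
  assert (0 <= a m <= 1) by (apply H; lia). nra.
Qed.

(* Expanding both products, the difference dominates the first-order terms termwise. *)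
Lemma prodn_sub_ge_sumn n (a b : nat -> R) x : (forall i, (i < n)%nat -> 0 <= b i <= a i) -> 0 <= x ->
  x * sumn n (fun i => a i - b i) <= prodn n (fun i => 1 + x * a i) - prodn n (fun i => 1 + x * b i)
  /\ 0 <= x * sumn n (fun i => a i - b i).
Proof.
  intros H Hx. induction n as [|n IH]; simpl; [lra|].
  destruct IH as [I1 I2]; [intros; apply H; lia|].
  assert (Hn := H n ltac:(lia)).
  assert (1 <= prodn n (fun i => 1 + x * b i))
    by (apply prodn_ge_1; intros i Hi; specialize (H i ltac:(lia)); nra).
  set (Pa := prodn n (fun i => 1 + x * a i)) in *. set (Pb := prodn n (fun i => 1 + x * b i)) in *.
  split; [|nra].
  assert (0 <= x * (a n - b n)) by (apply Rmult_le_pos; lra).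
  assert (0 <= x * a n) by nra.
  assert (Pa * (1 + x * a n) - Pb * (1 + x * b n) = (Pa - Pb) * (1 + x * a n) + Pb * (x * (a n - b n)))
    by ring.
  nra.
Qed.

Lemma oprodn_Some m (a : nat -> option R) w : oprodn m a = Some w ->
  exists u, (forall i, (i < m)%nat -> a i = Some (u i)) /\ w = prodn m u.
Proof.
  revert w; induction m; simpl; intros w H.
  - injection H as <-. exists (fun _ => 0); split; [intros; lia | auto].
  - destruct (oprodn m a) as [u0|]; [|discriminate].
    destruct (a m) as [v|] eqn:Ea; [|discriminate]. injection H as <-.
    destruct (IHm u0 eq_refl) as [u [Hu ->]].
    exists (fun i => if Nat.eq_dec i m then v else u i). split.
    + intros i Hi. destruct (Nat.eq_dec i m); [subst; auto | apply Hu; lia].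
    + f_equal; [apply prodn_ext; intros i Hi; destruct (Nat.eq_dec i m); [lia | auto]|].
      destruct (Nat.eq_dec m m); [auto | lia].
Qed.

Lemma oprodn_all_Some m (a : nat -> option R) (u : nat -> R) :
  (forall i, (i < m)%nat -> a i = Some (u i)) -> oprodn m a = Some (prodn m u).
Proof. induction m; simpl; intros H; auto. rewrite IHm by (intros; apply H; lia). rewrite H by lia; auto. Qed.

Context {T : Type}.
Implicit Types (p q : nat -> T -> R) (l : list T).

Lemma prodi_ext p q k l :
  (forall i a, (k <= i < k + length l)%nat -> p i a = q i a) -> prodi p k l = prodi q k l.
Proof.
  revert k; induction l; intros k H; simpl; auto.
  rewrite H by (simpl; lia). rewrite IHl; auto. intros; apply H; simpl; lia.
Qed.

Lemma prodi_pos p k l :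
  (forall i a, (k <= i < k + length l)%nat -> 0 < p i a) -> 0 < prodi p k l.
Proof.
  revert k; induction l; intros k H; simpl; [lra|].
  apply Rmult_lt_0_compat; [apply H; simpl; lia | apply IHl; intros; apply H; simpl; lia].
Qed.

Lemma prodi_nonneg p k l :
  (forall i a, (k <= i < k + length l)%nat -> 0 <= p i a) -> 0 <= prodi p k l.
Proof.
  revert k; induction l; intros k H; simpl; [lra|].
  apply Rmult_le_pos; [apply H; simpl; lia | apply IHl; intros; apply H; simpl; lia].
Qed.

Lemma prodi_mult p q k l : prodi (fun i a => p i a * q i a) k l = prodi p k l * prodi q k l.
Proof. revert k; induction l; intros k; simpl; [ring | rewrite IHl; ring]. Qed.

Lemma prodi_le p q k l :
  (forall i a, (k <= i < k + length l)%nat -> 0 <= p i a <= q i a) -> prodi p k l <= prodi q k l.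
Proof.
  revert k; induction l; intros k H; simpl; [lra|].
  assert (H0 := H k a ltac:(simpl; lia)).
  assert (0 <= prodi p (S k) l) by (apply prodi_nonneg; intros; apply H; simpl; lia).
  assert (prodi p (S k) l <= prodi q (S k) l) by (apply IHl; intros; apply H; simpl; lia).
  apply Rmult_le_compat; lra.
Qed.

Lemma prodi_div p q k l :
  (forall i a, (k <= i < k + length l)%nat -> 0 < q i a) ->
  prodi p k l / prodi q k l = prodi (fun i a => p i a / q i a) k l.
Proof.
  intros H. assert (0 < prodi q k l) by (apply prodi_pos; auto).
  assert (prodi p k l = prodi (fun i a => p i a / q i a) k l * prodi q k l) as ->; [|field; lra].
  rewrite <- prodi_mult. apply prodi_ext. intros i a Hi. specialize (H i a Hi). field; lra.
Qed.

Lemma prodi_const (a : nat -> R) k l : prodi (fun i _ => a i) k l = prodn (length l) (fun i => a (k + i)%nat).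
Proof.
  revert k; induction l; intros k; simpl length; simpl prodi; auto.
  rewrite prodn_S_shift, IHl, Nat.add_0_r. f_equal. apply prodn_ext; intros; f_equal; lia.
Qed.

Lemma prodi_map_seq p k l : prodi p k l = prod_apply (map p (seq k (length l))) l.
Proof. revert k; induction l; simpl; intros; auto. rewrite IHl; auto. Qed.

Lemma prod_sums_map_seq p k m : prod_sums (map p (seq k m)) = prodn m (fun i => Sum (p (k + i)%nat)).
Proof.
  revert k; induction m; intros k; [auto|].
  rewrite prodn_S_shift. simpl. fold (prod_sums (map p (seq (S k) m))).
  rewrite IHm, Nat.add_0_r. f_equal. apply prodn_ext. intros i _. do 2 f_equal. lia.
Qed.

Lemma has_sum_prodi n p (s : nat -> R) :
  (forall i, (i < n)%nat -> (forall x, 0 <= p i x) /\ has_sum (p i) (s i)) ->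
  has_sum (fun x : vec T n => prodi p 0 (proj1_sig x)) (prodn n s).
Proof.
  intros H.
  apply (has_sum_ext (fun x : vec T n => prod_apply (map p (seq 0 n)) (proj1_sig x))).
  { intros x. rewrite prodi_map_seq, vec_length; auto. }
  replace (prodn n s) with (prod_sums (map p (seq 0 n))).
  - apply has_sum_prod_apply; [rewrite length_map, length_seq; auto|].
    intros h Hh. apply in_map_iff in Hh. destruct Hh as [i [<- Hi]]. apply in_seq in Hi.
    destruct (H i ltac:(lia)) as [H1 H2]. split; auto. exists (s i); auto.
  - rewrite prod_sums_map_seq. apply prodn_ext. intros i Hi. apply Sum_eq, H; auto.
Qed.

End IndexedProducts.

Section Fibers.
Context {A B : Type}.

Fixpoint fibers (g : nat -> A -> B -> R) (k : nat) (xs : list A) : list (B -> R) :=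
  match xs with nil => nil | x :: xs' => g k x :: fibers g (S k) xs' end.

Lemma fibers_length g k xs : length (fibers g k xs) = length xs.
Proof. revert k; induction xs; simpl; auto. Qed.

Lemma In_fibers g k xs h : In h (fibers g k xs) ->
  exists i x, (k <= i < k + length xs)%nat /\ h = g i x.
Proof.
  revert k; induction xs as [|x xs IH]; simpl; intros k H; [contradiction|].
  destruct H as [<- | H]; [exists k, x; split; [lia | auto]|].
  destruct (IH (S k) H) as [i [y [Hi ->]]]. exists i, y; split; [lia | auto].
Qed.

Lemma prod_sums_fibers g k xs : prod_sums (fibers g k xs) = prodi (fun i x => Sum (g i x)) k xs.
Proof. revert k; induction xs; intros k; simpl; auto. unfold prod_sums in *; simpl. rewrite IHxs; auto. Qed.

Lemma prodW_fibers (W : nat -> A -> B -> R) k xs ys : prodW W k xs ys = prod_apply (fibers W k xs) ys.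
Proof. revert k ys; induction xs; intros k [|y ys]; simpl; auto. rewrite IHxs; auto. Qed.

End Fibers.

Lemma prodi_prodW_fibers {A B} (r : nat -> A -> R) (W : nat -> A -> B -> R) k xs ys :
  length xs = length ys ->
  prodi r k xs * prodW W k xs ys = prod_apply (fibers (fun i y a => r i a * W i a y) k ys) xs.
Proof.
  revert k ys; induction xs; intros k [|y ys] E; simpl in *; try discriminate; try ring.
  injection E as E. rewrite <- (IHxs (S k) ys E). ring.
Qed.

(** * Convex functions *)

Lemma Inf_spec (E : R -> Prop) : (exists v, E v) -> (exists lb, forall v, E v -> lb <= v) ->
  (forall v, E v -> Inf E <= v) /\ (forall w, (forall v, E v -> w <= v) -> w <= Inf E).
Proof.
  intros [v0 Hv0] [lb Hlb].
  set (E' := fun v => E (- v)).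
  assert (Hex : exists L, is_lub E' L).
  { destruct (completeness E') as [L HL]; [| |exists L; exact HL].
    - exists (- lb). intros v Hv. specialize (Hlb _ Hv). lra.
    - exists (- v0). unfold E'. rewrite Ropp_involutive; auto. }
  unfold Inf. fold E'. pose proof (epsilon_spec (inhabits 0) (is_lub E') Hex) as [H1 H2].
  set (L := epsilon (inhabits 0) (is_lub E')) in *.
  split.
  - intros v Hv. assert (H : E' (- v)) by (unfold E'; rewrite Ropp_involutive; auto).
    specialize (H1 _ H). lra.
  - intros w Hw. assert (L <= - w); [|lra].
    apply H2. intros v Hv. specialize (Hw _ Hv). lra.
Qed.

Lemma Sup_bounded (E : R -> Prop) : (exists v, E v) -> bound E ->
  exists s, Sup E = Some s /\ is_lub E s.
Proof.
  intros Hne Hb. unfold Sup. destruct (excluded_middle_informative (bound E)) as [_|]; [|contradiction].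
  eexists; split; [reflexivity|]. apply epsilon_spec.
  destruct (completeness E Hb Hne) as [m Hm]; exists m; exact Hm.
Qed.

Lemma Sup_Some_is_lub (E : R -> Prop) s : (exists v, E v) -> Sup E = Some s -> is_lub E s.
Proof.
  intros Hne HS. unfold Sup in HS. destruct (excluded_middle_informative (bound E)) as [Hb|]; [|discriminate].
  destruct (Sup_bounded E Hne Hb) as [s' [E' Hs']]. unfold Sup in E'.
  destruct (excluded_middle_informative (bound E)); [|contradiction]. congruence.
Qed.

Lemma derivable_pt_lim_le_secant (f : R -> R) a l d C : derivable_pt_lim f a l ->
  (forall s, 0 < s <= 1 -> f (a + s * d) - f a <= s * C) -> l * d <= C.
Proof.
  intros Hd Hsec.
  destruct (Req_dec d 0) as [->|Hd0].
  { specialize (Hsec 1 ltac:(lra)). rewrite Rmult_0_r, Rplus_0_r in Hsec. lra. }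
  apply Rnot_lt_le; intro Hlt.
  set (D := l * d - C).
  assert (Habs : 0 < Rabs d) by (apply Rabs_pos_lt; auto).
  destruct (Hd (D / (2 * Rabs d)) ltac:(unfold D; apply Rdiv_lt_0_compat; lra)) as [del Hdel].
  pose proof (cond_pos del) as Hdel0.
  set (s := Rmin 1 (del / (2 * Rabs d))).
  assert (Hs0 : 0 < s) by (apply Rmin_glb_lt; [lra | apply Rdiv_lt_0_compat; lra]).
  assert (Hs1 : s <= 1) by apply Rmin_l.
  assert (Hs2 : s * Rabs d <= del / 2).
  { replace (del / 2) with (del / (2 * Rabs d) * Rabs d) by (field; lra).
    apply Rmult_le_compat_r; [lra | apply Rmin_r]. }
  assert (Hh : Rabs (s * d) = s * Rabs d) by (rewrite Rabs_mult, Rabs_pos_eq; lra).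
  specialize (Hdel (s * d) ltac:(apply Rmult_integral_contrapositive; split; lra) ltac:(lra)).
  specialize (Hsec s (conj Hs0 Hs1)).
  replace ((f (a + s * d) - f a) / (s * d) - l) with ((f (a + s * d) - f a - s * (l * d)) / (s * d))
    in Hdel by (field; split; lra).
  unfold Rdiv in Hdel. rewrite Rabs_mult, Rabs_inv, Hh in Hdel.
  apply (Rmult_lt_compat_r (s * Rabs d)) in Hdel; [|nra].
  replace (Rabs (f (a + s * d) - f a - s * (l * d)) * / (s * Rabs d) * (s * Rabs d))
    with (Rabs (f (a + s * d) - f a - s * (l * d))) in Hdel by (field; lra).
  replace (D * / (2 * Rabs d) * (s * Rabs d)) with (s * D / 2) in Hdel by (field; lra).
  apply Rabs_def2 in Hdel. unfold D in Hdel. nra.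
Qed.

Section Convex.
Variables f f1 : R -> R.
Hypothesis Hconv : convex_pos f.

Lemma convex_tangent_below a b : 0 < a -> 0 < b ->
  derivable_pt_lim f a (f1 a) -> f a + f1 a * (b - a) <= f b.
Proof.
  intros Ha Hb Hd.
  enough (f1 a * (b - a) <= f b - f a) by lra.
  apply (derivable_pt_lim_le_secant f a); auto.
  intros s Hs. pose proof (Hconv b a s Hb Ha ltac:(lra)) as H.
  replace (s * b + (1 - s) * a) with (a + s * (b - a)) in H by ring. lra.
Qed.

(* Convexity makes [f1] nondecreasing, so its difference quotients are nonnegative. *)
Lemma convex_second_derivative_nonneg (f2 : R -> R) :
  (forall t, 0 < t -> derivable_pt_lim f t (f1 t)) ->
  (forall t, 0 < t -> derivable_pt_lim f1 t (f2 t)) ->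
  forall t, 0 < t -> 0 <= f2 t.
Proof.
  intros D1 D2.
  assert (Mono : forall a b, 0 < a -> a < b -> f1 a <= f1 b).
  { intros a b Ha Hab. pose proof (convex_tangent_below a b Ha ltac:(lra) (D1 a Ha)).
    pose proof (convex_tangent_below b a ltac:(lra) Ha (D1 b ltac:(lra))). nra. }
  intros t Ht. apply Rnot_lt_le; intro Hn.
  destruct (D2 t Ht (- f2 t) ltac:(lra)) as [del Hdel]. pose proof (cond_pos del).
  set (h := Rmin (del / 2) (t / 2)).
  assert (Hh : 0 < h) by (apply Rmin_glb_lt; lra).
  assert (Hhd : Rabs h < del) by (rewrite Rabs_pos_eq by lra; unfold h; pose proof (Rmin_l (del/2) (t/2)); lra).
  specialize (Hdel h ltac:(lra) Hhd).
  pose proof (Mono t (t + h) Ht ltac:(lra)).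
  assert (0 <= (f1 (t + h) - f1 t) / h)
    by (apply Rmult_le_pos; [lra | apply Rlt_le, Rinv_0_lt_compat; lra]).
  apply Rabs_def2 in Hdel. lra.
Qed.

Lemma convex_bounded_on_segment a b : 0 < a <= b ->
  derivable_pt_lim f 1 (f1 1) -> exists M, forall t, a <= t <= b -> Rabs (f t) <= M.
Proof.
  intros Hab Hd1.
  exists (Rabs (f a) + Rabs (f b) + Rabs (f 1) + Rabs (f1 1) * (b + 1)).
  intros t Ht.
  assert (Up : f t <= Rmax (f a) (f b)).
  { destruct (Req_dec a b) as [E|E].
    - replace t with a by lra. apply Rmax_l.
    - set (s := (t - a) / (b - a)).
      assert (Hs : 0 <= s <= 1).
      { unfold s; split; [apply Rmult_le_pos; [lra | apply Rlt_le, Rinv_0_lt_compat; lra]|].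
        apply (Rmult_le_reg_r (b - a)); [lra|]. unfold Rdiv. rewrite Rmult_assoc, Rinv_l; lra. }
      pose proof (Hconv b a s ltac:(lra) ltac:(lra) Hs) as H.
      replace (s * b + (1 - s) * a) with t in H by (unfold s; field; lra).
      pose proof (Rmax_l (f a) (f b)). pose proof (Rmax_r (f a) (f b)). nra. }
  assert (Lo : f 1 + f1 1 * (t - 1) <= f t) by (apply convex_tangent_below; auto; lra).
  assert (Hlin : Rabs (f1 1 * (t - 1)) <= Rabs (f1 1) * (b + 1)).
  { rewrite Rabs_mult. apply Rmult_le_compat_l; [apply Rabs_pos|]. apply Rabs_le; lra. }
  assert (Rmax (f a) (f b) <= Rabs (f a) + Rabs (f b)).
  { pose proof (Rle_abs (f a)). pose proof (Rle_abs (f b)).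
    pose proof (Rabs_pos (f a)). pose proof (Rabs_pos (f b)). apply Rmax_lub; lra. }
  assert (0 <= Rabs (f1 1) * (b + 1)) by (apply Rmult_le_pos; [apply Rabs_pos | lra]).
  pose proof (Rabs_pos (f a)). pose proof (Rabs_pos (f b)). pose proof (Rabs_pos (f 1)).
  pose proof (Rle_abs (- f 1)). pose proof (Rle_abs (- (f1 1 * (t - 1)))).
  rewrite !Rabs_Ropp in *. apply Rabs_le; split; lra.
Qed.

End Convex.

Lemma derivable_pt_lim_scal_sub_sqr f l s k t : derivable_pt_lim f t l ->
  derivable_pt_lim (fun x => s * (f x - k * x * x)) t (s * (l - 2 * k * t)).
Proof.
  intros H.
  pose proof (derivable_pt_lim_scal _ s t _ (derivable_pt_lim_minus f _ t l _ H
    (derivable_pt_lim_scal _ k t _ (derivable_pt_lim_mult id id t 1 1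
       (derivable_pt_lim_id t) (derivable_pt_lim_id t))))) as H2.
  replace (s * (l - 2 * k * t)) with (s * (l - k * (1 * id t + id t * 1)))
    by (unfold id; ring).
  eapply derivable_pt_lim_ext; [|exact H2].
  intros z; unfold mult_real_fct, mult_fct, minus_fct, id; ring.
Qed.

Lemma derivable_pt_lim_scal_sub_lin f l s k t : derivable_pt_lim f t l ->
  derivable_pt_lim (fun x => s * (f x - 2 * k * x)) t (s * (l - 2 * k)).
Proof.
  intros H.
  pose proof (derivable_pt_lim_scal _ s t _ (derivable_pt_lim_minus f _ t l _ H
    (derivable_pt_lim_scal _ (2 * k) t _ (derivable_pt_lim_id t)))) as H2.
  replace (s * (l - 2 * k)) with (s * (l - 2 * k * 1)) by ring.
  eapply derivable_pt_lim_ext; [|exact H2].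
  intros z; unfold mult_real_fct, minus_fct, id; ring.
Qed.

Lemma inI_between lo hi a b c : inI lo hi a -> inI lo hi b -> a <= c <= b -> inI lo hi c.
Proof.
  intros [A1 [A2 A3]] [B1 [B2 B3]] H. split; [lra | split; [lra|]].
  destruct hi; auto. lra.
Qed.

Lemma tangent_below_of_second_derivative_nonneg lo hi (g g1 g2 : R -> R) :
  (forall t, 0 < t -> derivable_pt_lim g t (g1 t)) ->
  (forall t, 0 < t -> derivable_pt_lim g1 t (g2 t)) ->
  (forall t, inI lo hi t -> 0 <= g2 t) ->
  forall m t, inI lo hi m -> inI lo hi t -> g m + g1 m * (t - m) <= g t.
Proof.
  intros D1 D2 Pos.
  assert (Mono : forall a b, inI lo hi a -> inI lo hi b -> a <= b -> g1 a <= g1 b).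
  { intros a b Ha Hb Hab. destruct (Req_dec a b) as [->|Hne]; [lra|].
    destruct (MVT_cor2 g1 g2 a b) as [z [Ez Hz]]; [lra | intros z Hz; apply D2; destruct Ha; lra|].
    pose proof (Pos z (inI_between lo hi a b z Ha Hb ltac:(lra))). nra. }
  intros m t Hm Ht.
  destruct (Rtotal_order m t) as [Hlt|[->|Hgt]]; [| lra |].
  - destruct (MVT_cor2 g g1 m t) as [z [Ez Hz]]; [lra | intros z Hz; apply D1; destruct Hm; lra|].
    pose proof (Mono m z Hm (inI_between lo hi m t z Hm Ht ltac:(lra)) ltac:(lra)). nra.
  - destruct (MVT_cor2 g g1 t m) as [z [Ez Hz]]; [lra | intros z Hz; apply D1; destruct Ht; lra|].
    pose proof (Mono z m (inI_between lo hi t m z Ht Hm ltac:(lra)) Hm ltac:(lra)). nra.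
Qed.

(** * Data processing *)

Definition sqratio_term {T : Type} (r q : T -> R) (y : T) : R :=
  if Req_dec_T (q y) 0 then 0 else r y ^ 2 / q y.

(* [R^2/Q = lam^2 (P - Q)^2/Q + 2 R - Q] for the mixture [R = lam P + (1 - lam) Q]. *)
Lemma has_sum_sqratio_mix {T} (P Q : T -> R) lam c :
  has_sum P 1 -> has_sum Q 1 -> (forall y, Q y = 0 -> P y = 0) -> has_sum (chi2_term P Q) c ->
  has_sum (sqratio_term (fun y => lam * P y + (1 - lam) * Q y) Q) (1 + lam ^ 2 * c).
Proof.
  intros HP1 HQ1 HPQ Hc.
  apply (has_sum_ext (fun y => lam ^ 2 * chi2_term P Q y + (2 * (lam * P y + (1 - lam) * Q y) - Q y))).
  { intros y. unfold chi2_term, sqratio_term. destruct (Req_dec_T (Q y) 0) as [E|E].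
    - rewrite (HPQ y E), E. ring.
    - field; auto. }
  replace (1 + lam ^ 2 * c) with (lam ^ 2 * c + (2 * (lam * 1 + (1 - lam) * 1) - 1)) by ring.
  apply has_sum_plus; [apply has_sum_scal; auto|].
  apply has_sum_minus; [apply has_sum_scal, has_sum_plus; apply has_sum_scal|]; auto.
Qed.

Lemma sqratio_term_prodi {T} (r q : nat -> T -> R) k l :
  sqratio_term (prodi r k) (prodi q k) l = prodi (fun i => sqratio_term (r i) (q i)) k l.
Proof.
  unfold sqratio_term. revert k; induction l as [|a l IH]; intros k.
  - simpl. destruct (Req_dec_T 1 0); [lra | field].
  - specialize (IH (S k)). cbn [prodi].
    destruct (Req_dec_T (q k a) 0) as [E|E].
    + rewrite E, Rmult_0_l. destruct (Req_dec_T 0 0); [ring | lra].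
    + rewrite <- IH. destruct (Req_dec_T (prodi q (S k) l) 0) as [E2|E2].
      * rewrite E2, Rmult_0_r. destruct (Req_dec_T 0 0); [ring | lra].
      * destruct (Req_dec_T (q k a * prodi q (S k) l) 0) as [E3|E3].
        -- exfalso. apply Rmult_integral in E3; tauto.
        -- field; auto.
Qed.

Lemma has_sum_sqratio_prodP {T} n (r q : nat -> T -> R) (s : nat -> R) :
  (forall i, (i < n)%nat -> (forall a, 0 <= q i a) /\ has_sum (sqratio_term (r i) (q i)) (s i)) ->
  has_sum (sqratio_term (prodP n r) (prodP n q)) (prodn n s).
Proof.
  intros H. apply (has_sum_ext (fun x : vec T n => prodi (fun i => sqratio_term (r i) (q i)) 0 (proj1_sig x))).
  { intros x. symmetry. apply (sqratio_term_prodi r q 0 (proj1_sig x)). }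
  apply has_sum_prodi. intros i Hi. destruct (H i Hi) as [H1 H2]. split; auto.
  intros a. unfold sqratio_term. destruct (Req_dec_T (q i a) 0); [lra|].
  pose proof (H1 a). apply Rmult_le_pos; [apply pow2_ge_0 | apply Rlt_le, Rinv_0_lt_compat; lra].
Qed.

Section Channel.
Context {A B : Type} (W : A -> B -> R).
Hypothesis HW : forall a b, 0 <= W a b.
Hypothesis HW1 : forall a, has_sum (W a) 1.

Lemma channel_le_1 a b : W a b <= 1.
Proof. apply (has_sum_ge_term (W a)); auto. Qed.

Section Input.
Variable P : A -> R.
Hypothesis HP : forall a, 0 <= P a.
Hypothesis HP1 : has_sum P 1.

Lemma has_sum_push b : has_sum (fun a => P a * W a b) (push P W b).
Proof.
  apply has_sum_Sum, (summable_dominated _ P 1); auto. intros a.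
  rewrite Rabs_pos_eq by (apply Rmult_le_pos; auto).
  pose proof (channel_le_1 a b). specialize (HP a). specialize (HW a b). nra.
Qed.

Lemma push_nonneg b : 0 <= push P W b.
Proof. apply (has_sum_nonneg (fun a => P a * W a b)); [intros; apply Rmult_le_pos; auto | apply has_sum_push]. Qed.

Lemma has_sum_push_1 : has_sum (push P W) 1.
Proof.
  apply (has_sum_tonelli (fun a b => P a * W a b) P); auto.
  - intros; apply Rmult_le_pos; auto.
  - intros a. apply has_sum_scal_1; auto.
  - intros b; apply has_sum_push.
Qed.

Lemma push_channel_support b : push P W b = 0 -> forall a, 0 < P a -> W a b = 0.
Proof.
  intros H0 a Ha. pose proof (has_sum_ge_term (fun a => P a * W a b) _ a
    (fun a => Rmult_le_pos _ _ (HP a) (HW a b)) (has_sum_push b)) as H.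
  rewrite H0 in H. specialize (HW a b). simpl in H. nra.
Qed.

Lemma push_pos b : push P W b <> 0 -> exists a, 0 < P a * W a b.
Proof.
  intros Hne. apply NNPP; intro Hn. apply Hne, (has_sum_unique _ _ _ (has_sum_push b)).
  apply (has_sum_ext (fun _ => 0)); [|apply has_sum_zero].
  intros a. apply Rle_antisym; [apply Rmult_le_pos; auto | apply Rnot_lt_le; intro; apply Hn; eauto].
Qed.

End Input.

Lemma push_affine P Q lam b :
  (forall a, 0 <= P a) -> has_sum P 1 -> (forall a, 0 <= Q a) -> has_sum Q 1 ->
  push (fun a => lam * P a + (1 - lam) * Q a) W b = lam * push P W b + (1 - lam) * push Q W b.
Proof.
  intros HP HP1 HQ HQ1. apply Sum_eq.
  apply (has_sum_ext (fun a => lam * (P a * W a b) + (1 - lam) * (Q a * W a b))); [intros; ring|].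
  apply has_sum_plus; apply has_sum_scal, has_sum_push; auto.
Qed.

Section Ratios.
Variables (Q Rr : A -> R) (lo : R) (hi : option R).
Hypothesis HQ : forall a, 0 < Q a.
Hypothesis HR : forall a, 0 <= Rr a.
Hypothesis HQ1 : has_sum Q 1.
Hypothesis HR1 : has_sum Rr 1.
Hypothesis Hrat : forall a, inI lo hi (Rr a / Q a).

Let HQ0 a : 0 <= Q a := Rlt_le _ _ (HQ a).

Lemma push_eq_0 b : push Q W b = 0 -> push Rr W b = 0.
Proof.
  intros H0. apply (has_sum_unique _ _ _ (has_sum_push Rr HR HR1 b)).
  apply (has_sum_ext (fun _ => 0)); [|apply has_sum_zero].
  intros a. rewrite (push_channel_support Q HQ0 HQ1 b H0 a (HQ a)). ring.
Qed.

Lemma push_le_of_le (P P' : A -> R) (c d : R) b :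
  (forall a, 0 <= P a) -> has_sum P 1 -> (forall a, 0 <= P' a) -> has_sum P' 1 ->
  (forall a, c * P a <= d * P' a) -> c * push P W b <= d * push P' W b.
Proof.
  intros HP HP1 HP' HP1' Hle.
  apply (has_sum_le (fun a => c * (P a * W a b)) (fun a => d * (P' a * W a b)));
    [| apply has_sum_scal, has_sum_push; auto ..].
  intros a. specialize (Hle a). specialize (HW a b). nra.
Qed.

(* The output likelihood ratio is an average of input ratios, so it stays in [I]. *)
Lemma push_ratio_inI b : push Q W b <> 0 -> inI lo hi (push Rr W b / push Q W b).
Proof.
  intros Hne.
  assert (QYp : 0 < push Q W b) by (pose proof (push_nonneg Q HQ0 HQ1 b); lra).
  assert (Hmul : forall a, Rr a = Rr a / Q a * Q a) by (intros a; pose proof (HQ a); field; lra).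
  split; [|split].
  - destruct (push_pos Q HQ0 HQ1 b Hne) as [a Ha].
    pose proof (has_sum_ge_term (fun a => Rr a * W a b) _ a (fun a => Rmult_le_pos _ _ (HR a) (HW a b))
                  (has_sum_push Rr HR HR1 b)) as Hge. simpl in Hge.
    destruct (Hrat a) as [Hra _]. pose proof (HQ a).
    assert (0 < Rr a) by (rewrite Hmul; nra).
    apply Rdiv_lt_0_compat; auto. nra.
  - assert (Hlo : forall a, lo * Q a <= 1 * Rr a).
    { intros a. destruct (Hrat a) as [_ [H _]]. pose proof (HQ a). rewrite (Hmul a). nra. }
    pose proof (push_le_of_le Q Rr lo 1 b HQ0 HQ1 HR HR1 Hlo).
    apply (Rmult_le_reg_r (push Q W b)); auto. field_simplify; lra.
  - destruct hi as [h|]; auto.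
    assert (Hhi : forall a, 1 * Rr a <= h * Q a).
    { intros a. destruct (Hrat a) as [_ [_ H]]. pose proof (HQ a). rewrite (Hmul a). nra. }
    pose proof (push_le_of_le Rr Q 1 h b HR HR1 HQ0 HQ1 Hhi).
    apply (Rmult_le_reg_r (push Q W b)); auto. field_simplify; lra.
Qed.

Lemma Df_term_pos {T} (g : R -> R) (P P' : T -> R) x : 0 < P' x -> Df_term g P P' x = P' x * g (P x / P' x).
Proof. intros H. unfold Df_term. destruct (Req_dec_T (P' x) 0); [lra | auto]. Qed.

Section DataProcessing.
Variables phi d : R -> R.
Hypothesis Hphi : forall t, inI lo hi t -> 0 <= phi t.
Hypothesis Htan : forall m t, inI lo hi m -> inI lo hi t -> phi m + d m * (t - m) <= phi t.

(* Jensen at the output point [b]: the tangent at the output ratio [m] lies below [phi]. *)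
Lemma Df_term_push_le b s :
  has_sum (fun a => Q a * W a b * phi (Rr a / Q a)) s ->
  0 <= Df_term phi (push Rr W) (push Q W) b <= s.
Proof.
  intros Hs. unfold Df_term. destruct (Req_dec_T (push Q W b) 0) as [E|E].
  { split; [lra|]. apply (has_sum_nonneg _ _ (fun a => Rmult_le_pos _ _
       (Rmult_le_pos _ _ (HQ0 a) (HW a b)) (Hphi _ (Hrat a))) Hs). }
  assert (Hm := push_ratio_inI b E). set (m := push Rr W b / push Q W b) in *.
  assert (QYp : 0 < push Q W b) by (pose proof (push_nonneg Q HQ0 HQ1 b); lra).
  split; [apply Rmult_le_pos; [lra | auto]|].
  assert (Hlin : phi m * push Q W b + d m * push Rr W b - d m * m * push Q W b <= s).
  { apply (has_sum_le (fun a => phi m * (Q a * W a b) + d m * (Rr a * W a b) - d m * m * (Q a * W a b))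
                      (fun a => Q a * W a b * phi (Rr a / Q a))); auto.
    - intros a. pose proof (Htan m _ Hm (Hrat a)). pose proof (HQ a). pose proof (HW a b).
      replace (Rr a * W a b) with (Q a * W a b * (Rr a / Q a)) by (field; lra).
      assert (0 <= Q a * W a b) by (apply Rmult_le_pos; lra). nra.
    - apply has_sum_minus; [apply has_sum_plus|]; apply has_sum_scal, has_sum_push; auto. }
  assert (Hd : d m * push Rr W b = d m * m * push Q W b) by (unfold m; field; lra).
  rewrite Hd in Hlin. lra.
Qed.

Lemma Df_push_le_of_tangent Sx :
  has_sum (Df_term phi Rr Q) Sx ->
  exists Sy, has_sum (Df_term phi (push Rr W) (push Q W)) Sy /\ Sy <= Sx.
Proof.
  intros HSx.
  set (F := fun a b => Q a * W a b * phi (Rr a / Q a)).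
  set (G := fun a => Q a * phi (Rr a / Q a)).
  assert (HG : has_sum G Sx) by (apply (has_sum_ext (Df_term phi Rr Q)); auto; intros; apply Df_term_pos; auto).
  assert (HF : forall a b, 0 <= F a b)
    by (intros a b; apply Rmult_le_pos; [apply Rmult_le_pos | apply Hphi]; auto).
  assert (HFG : forall a, has_sum (F a) (G a)).
  { intros a. apply (has_sum_ext (fun b => G a * W a b)); [intros; unfold F, G; ring|].
    apply has_sum_scal_1; auto. }
  assert (HFb : forall b, has_sum (fun a => F a b) (Sum (fun a => F a b))).
  { intros b. apply has_sum_Sum. destruct (has_sum_dominated_nonneg (fun a => F a b) G Sx) as [s [Hs _]]; auto.
    - intros a; split; auto. unfold F, G. pose proof (channel_le_1 a b). pose proof (HW a b).
      assert (0 <= Q a * phi (Rr a / Q a)) by (apply Rmult_le_pos; auto).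
      replace (Q a * W a b * phi (Rr a / Q a)) with (Q a * phi (Rr a / Q a) * W a b) by ring. nra.
    - exists s; auto. }
  pose proof (has_sum_tonelli F G _ Sx HF HFG HG HFb) as Hton.
  apply has_sum_of_bounded.
  - intros b; apply (Df_term_push_le b _ (HFb b)).
  - intros lb Nlb.
    assert (Hn : forall b, 0 <= Sum (fun a => F a b))
      by (intros b; apply (has_sum_nonneg (fun a => F a b)); auto).
    eapply Rle_trans; [|apply (lsum_le_has_sum _ _ lb Hn Hton Nlb)].
    apply lsum_le; intros b; apply (Df_term_push_le b _ (HFb b)).
Qed.

End DataProcessing.

(* Data processing for [g], which need only be convex on [I]: subtract the tangent at [1]. *)
Lemma data_processing_on_inI (g g1 : R -> R) Gx :
  (forall m t, inI lo hi m -> inI lo hi t -> g m + g1 m * (t - m) <= g t) ->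
  inI lo hi 1 -> has_sum (Df_term g Rr Q) Gx ->
  exists Gy, has_sum (Df_term g (push Rr W) (push Q W)) Gy /\ Gy <= Gx.
Proof.
  intros Htan H1 HGx.
  set (phi := fun t => g t - g 1 - g1 1 * (t - 1)).
  set (Sx := Gx - g 1 * 1 - g1 1 * (1 - 1)).
  assert (Hdecomp : forall (P P' : B -> R) b, (P' b = 0 -> P b = 0) ->
            Df_term g P P' b = Df_term phi P P' b + g 1 * P' b + g1 1 * (P b - P' b)).
  { intros P P' b HP. unfold Df_term, phi. destruct (Req_dec_T (P' b) 0) as [E|E].
    - rewrite E, HP by auto. ring.
    - field; auto. }
  destruct (Df_push_le_of_tangent phi (fun m => g1 m - g1 1)) with (Sx := Sx) as [Sy [HSy HSyle]].
  - intros t Ht. pose proof (Htan 1 t H1 Ht). unfold phi; lra.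
  - intros m t Hm Ht. pose proof (Htan m t Hm Ht). unfold phi; lra.
  - apply (has_sum_ext (fun a => Df_term g Rr Q a - g 1 * Q a - g1 1 * (Rr a - Q a))).
    + intros a. rewrite !Df_term_pos by auto. unfold phi. field. pose proof (HQ a); lra.
    + apply has_sum_minus; [apply has_sum_minus|]; [auto | apply has_sum_scal; auto |].
      apply has_sum_scal, has_sum_minus; auto.
  - exists (Sy + g 1 * 1 + g1 1 * (1 - 1)). split; [|unfold Sx in HSyle; lra].
    apply (has_sum_ext (fun b => Df_term phi (push Rr W) (push Q W) b + g 1 * push Q W b
                                 + g1 1 * (push Rr W b - push Q W b))).
    + intros b. symmetry. apply Hdecomp, push_eq_0.
    + apply has_sum_plus; [apply has_sum_plus|]; [auto | apply has_sum_scal | apply has_sum_scal, has_sum_minus];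
        apply has_sum_push_1; auto.
Qed.

(* With [g = sig (f - kap t^2)] convex on [I], data processing for [g] compares the
   [f]-divergence gap with [kap] times the gap of [sum R^2/Q]. *)
Lemma Df_gap_sqratio (f f1 f2 : R -> R) (kap sig Dx Sx2 Sy2 : R) :
  (forall t, 0 < t -> derivable_pt_lim f t (f1 t)) ->
  (forall t, 0 < t -> derivable_pt_lim f1 t (f2 t)) ->
  (sig = 1 \/ sig = -1) ->
  (forall t, inI lo hi t -> 0 <= sig * (f2 t - 2 * kap)) ->
  inI lo hi 1 ->
  has_sum (Df_term f Rr Q) Dx ->
  has_sum (sqratio_term Rr Q) Sx2 ->
  has_sum (sqratio_term (push Rr W) (push Q W)) Sy2 ->
  0 <= sig * ((Dx - Df f (push Rr W) (push Q W)) - kap * (Sx2 - Sy2)).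
Proof.
  intros D1 D2 Hsig Hpos H1 HDx HSx2 HSy2.
  set (g := fun x => sig * (f x - kap * x * x)).
  assert (Htan : forall m t, inI lo hi m -> inI lo hi t -> g m + sig * (f1 m - 2 * kap * m) * (t - m) <= g t).
  { apply (tangent_below_of_second_derivative_nonneg lo hi g _ (fun x => sig * (f2 x - 2 * kap))); auto.
    - intros; apply derivable_pt_lim_scal_sub_sqr; auto.
    - intros; apply derivable_pt_lim_scal_sub_lin; auto. }
  assert (Hsq : sig * sig = 1) by (destruct Hsig as [-> | ->]; ring).
  assert (Hsplit : forall (P P' : B -> R) b,
            Df_term f P P' b = sig * Df_term g P P' b + kap * sqratio_term P P' b).
  { intros P P' b. unfold Df_term, sqratio_term, g. destruct (Req_dec_T (P' b) 0); [ring|].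
    replace (sig * (P' b * (sig * (f (P b / P' b) - kap * (P b / P' b) * (P b / P' b)))))
      with (sig * sig * (P' b * (f (P b / P' b) - kap * (P b / P' b) * (P b / P' b)))) by ring.
    rewrite Hsq. field; auto. }
  destruct (data_processing_on_inI g _ (sig * Dx - sig * kap * Sx2) Htan H1) as [Gy [HGy HGle]].
  { apply (has_sum_ext (fun a => sig * Df_term f Rr Q a - sig * kap * sqratio_term Rr Q a)).
    - intros a. unfold Df_term, sqratio_term, g. destruct (Req_dec_T (Q a) 0); [ring | field; auto].
    - apply has_sum_minus; apply has_sum_scal; auto. }
  assert (HDy : Df f (push Rr W) (push Q W) = sig * Gy + kap * Sy2).
  { apply Sum_eq, (has_sum_ext (fun b => sig * Df_term g (push Rr W) (push Q W) b
                                         + kap * sqratio_term (push Rr W) (push Q W) b)).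
    - intros b; symmetry; apply Hsplit.
    - apply has_sum_plus; apply has_sum_scal; auto. }
  rewrite HDy.
  replace (sig * (Dx - (sig * Gy + kap * Sy2) - kap * (Sx2 - Sy2)))
    with (sig * Dx - sig * kap * Sx2 - sig * sig * Gy) by ring.
  rewrite Hsq. lra.
Qed.

End Ratios.

Lemma has_sum_chi2_push (P Q : A -> R) :
  (forall a, 0 < P a) -> (forall a, 0 < Q a) -> has_sum P 1 -> has_sum Q 1 ->
  summable (chi2_term P Q) ->
  has_sum (chi2_term (push P W) (push Q W)) (chi2 (push P W) (push Q W)) /\
  0 <= chi2 (push P W) (push Q W) <= chi2 P Q.
Proof.
  intros HP HQ HP1 HQ1 Hs.
  assert (Hchi : forall (P' Q' : B -> R) b, chi2_term P' Q' b = Df_term (fun t => (t - 1) ^ 2) P' Q' b).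
  { intros P' Q' b. unfold chi2_term, Df_term. destruct (Req_dec_T (Q' b) 0); [auto | field; auto]. }
  destruct (Df_push_le_of_tangent Q P 0 None HQ (fun a => Rlt_le _ _ (HP a)) HQ1 HP1
              (fun a => conj (Rdiv_lt_0_compat _ _ (HP a) (HQ a))
                             (conj (Rlt_le _ _ (Rdiv_lt_0_compat _ _ (HP a) (HQ a))) I))
              (fun t => (t - 1) ^ 2) (fun m => 2 * (m - 1))) with (Sx := chi2 P Q)
    as [Sy [HSy HSyle]].
  - intros; apply pow2_ge_0.
  - intros m t _ _. pose proof (pow2_ge_0 (t - m)). nra.
  - apply (has_sum_ext (chi2_term P Q)); [|apply has_sum_Sum; auto].
    intros a. unfold chi2_term, Df_term. destruct (Req_dec_T (Q a) 0); [auto | field; auto].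
  - assert (HC : has_sum (chi2_term (push P W) (push Q W)) Sy)
      by (eapply has_sum_ext; [|exact HSy]; intros; symmetry; apply Hchi).
    assert (Hnn : forall b, 0 <= chi2_term (push P W) (push Q W) b).
    { intros b. unfold chi2_term. destruct (Req_dec_T (push Q W b) 0) as [E|E]; [lra|].
      pose proof (push_nonneg Q (fun a => Rlt_le _ _ (HQ a)) HQ1 b).
      apply Rmult_le_pos; [apply pow2_ge_0 | apply Rlt_le, Rinv_0_lt_compat; lra]. }
    replace (chi2 (push P W) (push Q W)) with Sy by (symmetry; apply Sum_eq; auto).
    split; [auto | split; [apply (has_sum_nonneg _ _ Hnn HC) | auto]].
Qed.
End Channel.

(** * Limits as [lam -> 0+] *)

Lemma lim0plus_limit1_in (g : R -> R) L :
  lim0plus g L <-> limit1_in g (fun x => 0 < x) L 0.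
Proof.
  split.
  - intros H eps He. destruct (H eps He) as [d [Hd Hg]]. exists d; split; auto.
    intros x [Hx Hxd]. simpl in *. unfold R_dist in *. rewrite Rminus_0_r, Rabs_pos_eq in Hxd by lra.
    apply Hg; lra.
  - intros H eps He. destruct (H eps He) as [d [Hd Hg]]. exists d; split; auto.
    intros x Hx. apply (Hg x). simpl. unfold R_dist. rewrite Rminus_0_r, Rabs_pos_eq; lra.
Qed.

Lemma lim0plus_mult g h a b : lim0plus g a -> lim0plus h b -> lim0plus (fun x => g x * h x) (a * b).
Proof. rewrite !lim0plus_limit1_in. apply limit_mul. Qed.

Lemma lim0plus_minus g h a b : lim0plus g a -> lim0plus h b -> lim0plus (fun x => g x - h x) (a - b).
Proof. rewrite !lim0plus_limit1_in. apply limit_minus. Qed.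

Lemma lim0plus_const c : lim0plus (fun _ => c) c.
Proof. intros eps He. exists 1; split; [lra|]. intros. rewrite Rminus_diag, Rabs_R0; auto. Qed.

Lemma lim0plus_continuity_pt g : continuity_pt g 0 -> lim0plus g (g 0).
Proof.
  intros H eps He. destruct (H eps He) as [d [Hd Hg]]. exists d; split; auto.
  intros x Hx. apply (Hg x). split; [split; [exact I | lra]|].
  simpl. unfold R_dist. rewrite Rminus_0_r, Rabs_pos_eq; lra.
Qed.

Lemma lim0plus_eq_near g h L : (exists d, 0 < d /\ forall x, 0 < x < d -> g x = h x) ->
  lim0plus g L -> lim0plus h L.
Proof.
  intros [d [Hd E]] H eps He. destruct (H eps He) as [d' [Hd' Hg]].
  exists (Rmin d d'); split; [apply Rmin_glb_lt; auto|].
  intros x Hx. pose proof (Rmin_l d d'). pose proof (Rmin_r d d').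
  rewrite <- E by lra. apply Hg; lra.
Qed.

Lemma lim0plus_squeeze g h k L : (exists d, 0 < d /\ forall x, 0 < x < d -> g x <= h x <= k x) ->
  lim0plus g L -> lim0plus k L -> lim0plus h L.
Proof.
  intros [d [Hd Hle]] Hg Hk eps He.
  destruct (Hg eps He) as [d1 [Hd1 H1]], (Hk eps He) as [d2 [Hd2 H2]].
  exists (Rmin d (Rmin d1 d2)); split; [repeat apply Rmin_glb_lt; auto|].
  intros x Hx. pose proof (Rmin_l d (Rmin d1 d2)). pose proof (Rmin_r d (Rmin d1 d2)).
  pose proof (Rmin_l d1 d2). pose proof (Rmin_r d1 d2).
  specialize (Hle x ltac:(lra)). specialize (H1 x ltac:(lra)). specialize (H2 x ltac:(lra)).
  apply Rabs_def2 in H1. apply Rabs_def2 in H2. apply Rabs_def1; lra.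
Qed.

Lemma lim0plus_opt_of_near (o : R -> option R) g L :
  (exists d, 0 < d /\ forall x, 0 < x < d -> o x = Some (g x)) -> lim0plus g L -> lim0plus_opt o L.
Proof.
  intros [d [Hd E]] H eps He. destruct (H eps He) as [d' [Hd' Hg]].
  exists (Rmin d d'); split; [apply Rmin_glb_lt; auto|].
  intros x Hx. pose proof (Rmin_l d d'). pose proof (Rmin_r d d').
  exists (g x). split; [apply E | apply Hg]; lra.
Qed.

Lemma continuity_pt_affine a b x0 : continuity_pt (fun x => a + x * b) x0.
Proof. reg. Qed.

Lemma continuity_pt_prodn_affine m (a : nat -> R) x0 :
  continuity_pt (fun x => prodn m (fun i => 1 + x * a i)) x0.
Proof.
  induction m; simpl.
  - apply continuity_pt_const. intros u v; auto.
  - apply (continuity_pt_mult (fun x => prodn m (fun i => 1 + x * a i))); auto.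
    apply continuity_pt_affine.
Qed.

Lemma lim0plus_prodn_affine m (a : nat -> R) : lim0plus (fun x => prodn m (fun i => 1 + x * a i)) 1.
Proof.
  pose proof (lim0plus_continuity_pt _ (continuity_pt_prodn_affine m a 0)) as H. cbv beta in H.
  replace (prodn m (fun i => 1 + 0 * a i)) with 1 in H; auto.
  transitivity (prodn m (fun _ => 1)); [symmetry; apply prodn_1 | apply prodn_ext; intros; ring].
Qed.

(* [prodn_affine_quotient m a x = (prod_{i<m} (1 + x a_i) - 1) / x], a polynomial in [x]. *)
Fixpoint prodn_affine_quotient (m : nat) (a : nat -> R) (x : R) : R :=
  match m with O => 0 | S k => prodn_affine_quotient k a x * (1 + x * a k) + a k end.

Lemma prodn_affine_sub_1 m a x : prodn m (fun i => 1 + x * a i) - 1 = x * prodn_affine_quotient m a x.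
Proof.
  induction m; simpl; [ring|].
  replace (prodn m (fun i => 1 + x * a i) * (1 + x * a m) - 1)
    with ((prodn m (fun i => 1 + x * a i) - 1) * (1 + x * a m) + x * a m) by ring.
  rewrite IHm; ring.
Qed.

Lemma prodn_affine_quotient_0 m a : prodn_affine_quotient m a 0 = sumn m a.
Proof. induction m; simpl; auto. rewrite IHm; ring. Qed.

Lemma continuity_pt_prodn_affine_quotient m a x0 : continuity_pt (prodn_affine_quotient m a) x0.
Proof.
  induction m; simpl.
  - apply continuity_pt_const. intros u v; auto.
  - apply (continuity_pt_plus (fun x => prodn_affine_quotient m a x * (1 + x * a m)) (fun _ => a m)).
    + apply (continuity_pt_mult (prodn_affine_quotient m a)); auto. apply continuity_pt_affine.
    + apply continuity_pt_const. intros u v; auto.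
Qed.

Lemma lim0plus_prodn_gap m (a b : nat -> R) :
  lim0plus (fun l => (prodn m (fun i => 1 + l ^ 2 * a i) - prodn m (fun i => 1 + l ^ 2 * b i)) / l ^ 2)
           (sumn m (fun i => a i - b i)).
Proof.
  set (q := fun a l => prodn_affine_quotient m a (l ^ 2)).
  assert (Hq : forall a, lim0plus (q a) (sumn m a)).
  { intros c. replace (sumn m c) with (q c 0)
      by (unfold q; rewrite <- prodn_affine_quotient_0; f_equal; ring).
    apply lim0plus_continuity_pt, (continuity_pt_comp (fun l => l ^ 2)); [reg|].
    apply continuity_pt_prodn_affine_quotient. }
  rewrite sumn_minus.
  apply (lim0plus_eq_near (fun l => q a l - q b l)); [|apply lim0plus_minus; auto].
  exists 1; split; [lra|]. intros l Hl. unfold q.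
  replace (prodn m (fun i => 1 + l ^ 2 * a i) - prodn m (fun i => 1 + l ^ 2 * b i))
    with ((prodn m (fun i => 1 + l ^ 2 * a i) - 1) - (prodn m (fun i => 1 + l ^ 2 * b i) - 1)) by ring.
  rewrite !prodn_affine_sub_1. field. lra.
Qed.

(** * The product setting *)

Section ProductSetting.
Variables (X Y : Type) (n : nat) (PX QX : nat -> X -> R) (W : nat -> X -> Y -> R).
Hypothesis HP : forall i, (i < n)%nat -> pmf_full (PX i).
Hypothesis HQ : forall i, (i < n)%nat -> pmf_full (QX i).
Hypothesis HW : forall i, (i < n)%nat -> stochastic (W i).

Lemma channel_nonneg i : (i < n)%nat -> forall a b, 0 <= W i a b.
Proof. intros Hi a. apply (HW i Hi a). Qed.

Lemma channel_sum_1 i : (i < n)%nat -> forall a, has_sum (W i a) 1.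
Proof. intros Hi a. apply (HW i Hi a). Qed.

Definition mix (lam : R) (i : nat) (x : X) : R := lam * PX i x + (1 - lam) * QX i x.

Lemma mix_pos lam i x : 0 <= lam <= 1 -> (i < n)%nat -> 0 < mix lam i x.
Proof.
  intros Hl Hi. destruct (HP i Hi) as [P0 _], (HQ i Hi) as [Q0 _].
  specialize (P0 x); specialize (Q0 x). unfold mix.
  destruct (Req_dec lam 0) as [->|]; [lra | nra].
Qed.

Lemma mix_pmf lam i : 0 <= lam <= 1 -> (i < n)%nat -> pmf_full (mix lam i).
Proof.
  intros Hl Hi. split; [intros; apply mix_pos; auto|].
  destruct (HP i Hi) as [_ P1], (HQ i Hi) as [_ Q1].
  replace 1 with (lam * 1 + (1 - lam) * 1) by ring. apply has_sum_plus; apply has_sum_scal; auto.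
Qed.

Lemma ratio_pos i x : (i < n)%nat -> 0 < PX i x / QX i x.
Proof. intros Hi. apply Rdiv_lt_0_compat; [apply (HP i Hi) | apply (HQ i Hi)]. Qed.

Lemma ratio_set_inhabited i : (i < n)%nat -> exists v, ratio_set (PX i) (QX i) v.
Proof.
  intros Hi. destruct (HP i Hi) as [_ P1].
  destruct (has_sum_inhabited _ _ P1 ltac:(lra)) as [x]. exists (PX i x / QX i x), x; auto.
Qed.

Lemma ratio_mul_le i x c : (i < n)%nat -> c <= PX i x / QX i x -> c * QX i x <= PX i x.
Proof.
  intros Hi H. destruct (HQ i Hi) as [Q0 _]. specialize (Q0 x).
  apply (Rmult_le_compat_r (QX i x)) in H; [|lra].
  replace (PX i x / QX i x * QX i x) with (PX i x) in H by (field; lra). lra.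
Qed.

Lemma ratio_le_mul i x c : (i < n)%nat -> PX i x / QX i x <= c -> PX i x <= c * QX i x.
Proof.
  intros Hi H. destruct (HQ i Hi) as [Q0 _]. specialize (Q0 x).
  apply (Rmult_le_compat_r (QX i x)) in H; [|lra].
  replace (PX i x / QX i x * QX i x) with (PX i x) in H by (field; lra). lra.
Qed.

Definition ratio_inf (i : nat) : R := Inf (ratio_set (PX i) (QX i)).

(* [inf P/Q <= 1 <= sup P/Q] because [P] and [Q] both have total mass 1. *)
Lemma ratio_inf_spec i : (i < n)%nat ->
  0 <= ratio_inf i /\ (forall x, ratio_inf i <= PX i x / QX i x) /\ ratio_inf i <= 1.
Proof.
  intros Hi.
  destruct (Inf_spec (ratio_set (PX i) (QX i)) (ratio_set_inhabited i Hi)) as [H1 H2].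
  { exists 0. intros v [x ->]. apply Rlt_le, ratio_pos; auto. }
  assert (Hr : forall x, ratio_inf i <= PX i x / QX i x) by (intros x; apply H1; exists x; auto).
  split; [apply H2; intros v [x ->]; apply Rlt_le, ratio_pos; auto | split; auto].
  rewrite <- (Rmult_1_r (ratio_inf i)).
  apply (has_sum_le (fun x => ratio_inf i * QX i x) (PX i)); [intros; apply ratio_mul_le; auto | |].
  - apply has_sum_scal, (HQ i Hi).
  - apply (HP i Hi).
Qed.

Lemma ratio_sup_spec i s : (i < n)%nat -> Sup (ratio_set (PX i) (QX i)) = Some s ->
  (forall x, PX i x / QX i x <= s) /\ 1 <= s.
Proof.
  intros Hi Hs. destruct (Sup_Some_is_lub _ _ (ratio_set_inhabited i Hi) Hs) as [H1 _].
  assert (Hr : forall x, PX i x / QX i x <= s) by (intros x; apply H1; exists x; auto).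
  split; auto. rewrite <- (Rmult_1_r s).
  apply (has_sum_le (PX i) (fun x => s * QX i x)); [intros; apply ratio_le_mul; auto | |].
  - apply (HP i Hi).
  - apply has_sum_scal, (HQ i Hi).
Qed.

Lemma xi1_eq lam : xi1 n PX QX lam = prodn n (fun i => 1 - lam + lam * ratio_inf i).
Proof. reflexivity. Qed.

Lemma xi1_bounds lam : 0 <= lam <= 1 -> 0 <= xi1 n PX QX lam <= 1.
Proof.
  intros Hl. rewrite xi1_eq. split.
  - apply prodn_nonneg. intros i Hi. destruct (ratio_inf_spec i Hi) as [A1 _]. nra.
  - apply prodn_le_1. intros i Hi. destruct (ratio_inf_spec i Hi) as [A1 [_ A3]]. nra.
Qed.

Lemma xi2_ge_1 lam w : 0 <= lam <= 1 -> xi2 n PX QX lam = Some w -> 1 <= w.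
Proof.
  intros Hl H. apply oprodn_Some in H. destruct H as [u [Hu ->]].
  apply prodn_ge_1. intros i Hi. specialize (Hu i Hi).
  destruct (Sup (ratio_set (PX i) (QX i))) as [s|] eqn:Es.
  - injection Hu as <-. destruct (ratio_sup_spec i s Hi Es). nra.
  - destruct (Req_dec_T lam 0); [injection Hu as <-; lra | discriminate].
Qed.

Lemma inI_xi_1 lam : 0 <= lam <= 1 -> inI (xi1 n PX QX lam) (xi2 n PX QX lam) 1.
Proof.
  intros Hl. split; [lra | split; [apply xi1_bounds; auto|]].
  destruct (xi2 n PX QX lam) eqn:E; auto. apply (xi2_ge_1 lam); auto.
Qed.

Lemma prodP_pos (r : nat -> X -> R) x :
  (forall i, (i < n)%nat -> forall a, 0 < r i a) -> 0 < prodP n r x.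
Proof. intros H. apply prodi_pos. intros i a Hi. rewrite vec_length in Hi. apply H; lia. Qed.

Lemma has_sum_prodP_1 (r : nat -> X -> R) :
  (forall i, (i < n)%nat -> pmf_full (r i)) -> has_sum (prodP n r) 1.
Proof.
  intros H. rewrite <- (prodn_1 n). apply has_sum_prodi. intros i Hi.
  destruct (H i Hi) as [H1 H2]. split; auto. intros; apply Rlt_le; auto.
Qed.

Lemma prodCh_nonneg x y : 0 <= prodCh n W x y.
Proof.
  unfold prodCh. rewrite prodW_fibers. apply prod_apply_nonneg.
  intros h Hh. apply In_fibers in Hh. destruct Hh as [i [a [Hi ->]]].
  rewrite vec_length in Hi. apply (HW i ltac:(lia)).
Qed.

Lemma has_sum_prodCh x : has_sum (prodCh n W x) 1.
Proof.
  apply (has_sum_ext (fun y : vec Y n => prod_apply (fibers W 0 (proj1_sig x)) (proj1_sig y))).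
  { intros y; unfold prodCh; rewrite prodW_fibers; auto. }
  replace 1 with (prod_sums (fibers W 0 (proj1_sig x))).
  - apply has_sum_prod_apply; [rewrite fibers_length, vec_length; auto|].
    intros h Hh. apply In_fibers in Hh. destruct Hh as [i [a [Hi ->]]]. rewrite vec_length in Hi.
    destruct (HW i ltac:(lia) a) as [H1 H2]. split; auto. exists 1; auto.
  - rewrite prod_sums_fibers, (prodi_ext _ (fun _ _ => 1)), prodi_const; [apply prodn_1|].
    intros i a Hi. rewrite vec_length in Hi. apply Sum_eq, (HW i ltac:(lia)).
Qed.

(* The likelihood ratio of the product is the product of the ratios [1 - lam + lam P_i/Q_i]. *)
Lemma prodP_ratio_inI lam x : 0 <= lam <= 1 ->
  inI (xi1 n PX QX lam) (xi2 n PX QX lam) (prodP n (mix lam) x / prodP n QX x).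
Proof.
  intros Hl. unfold prodP.
  rewrite prodi_div by (intros i a Hi; rewrite vec_length in Hi; apply (HQ i ltac:(lia))).
  assert (Hf : forall i a, (i < n)%nat -> mix lam i a / QX i a = 1 - lam + lam * (PX i a / QX i a)).
  { intros i a Hi. unfold mix. destruct (HQ i Hi) as [Q1 _]. specialize (Q1 a). field. lra. }
  split; [|split].
  - apply prodi_pos. intros i a Hi. rewrite vec_length in Hi.
    apply Rdiv_lt_0_compat; [apply mix_pos; auto; lia | apply (HQ i ltac:(lia))].
  - rewrite xi1_eq.
    replace (prodn n _) with (prodi (fun i (_ : X) => 1 - lam + lam * ratio_inf i) 0 (proj1_sig x))
      by (rewrite prodi_const, vec_length; auto).
    apply prodi_le. intros i a Hi. rewrite vec_length in Hi. rewrite Hf by lia.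
    destruct (ratio_inf_spec i ltac:(lia)) as [M1 [M2 M3]]. specialize (M2 a). nra.
  - destruct (xi2 n PX QX lam) as [w|] eqn:E; auto.
    apply oprodn_Some in E. destruct E as [u [Hu ->]].
    replace (prodn n u) with (prodi (fun i (_ : X) => u i) 0 (proj1_sig x))
      by (rewrite prodi_const, vec_length; auto).
    apply prodi_le. intros i a Hi. rewrite vec_length in Hi. simpl in Hi. rewrite Hf by lia.
    specialize (Hu i ltac:(lia)). pose proof (ratio_pos i a ltac:(lia)).
    destruct (Sup (ratio_set (PX i) (QX i))) as [s|] eqn:Es.
    + injection Hu as <-. destruct (ratio_sup_spec i s ltac:(lia) Es) as [S1 _]. specialize (S1 a). nra.
    + destruct (Req_dec_T lam 0) as [->|]; [injection Hu as <-; lra | discriminate].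
Qed.

Lemma push_prodP (r : nat -> X -> R) y :
  (forall i, (i < n)%nat -> (forall a, 0 <= r i a) /\ has_sum (r i) 1) ->
  push (prodP n r) (prodCh n W) y = prodP n (fun i => push (r i) (W i)) y.
Proof.
  intros Hr. apply Sum_eq.
  apply (has_sum_ext (fun x : vec X n => prod_apply (fibers (fun i y a => r i a * W i a y) 0 (proj1_sig y))
                                                     (proj1_sig x))).
  { intros x. unfold prodP, prodCh. rewrite prodi_prodW_fibers; auto. rewrite !vec_length; auto. }
  unfold prodP. rewrite <- (prod_sums_fibers (fun i y a => r i a * W i a y)).
  apply has_sum_prod_apply; [rewrite fibers_length, vec_length; auto|].
  intros h Hh. apply In_fibers in Hh. destruct Hh as [i [b [Hi ->]]]. rewrite vec_length in Hi.
  destruct (Hr i ltac:(lia)) as [H1 H2].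
  pose proof (channel_nonneg i ltac:(lia)) as W1. pose proof (channel_sum_1 i ltac:(lia)) as W2.
  split; [intros; apply Rmult_le_pos; auto|].
  exists (push (r i) (W i) b). apply (has_sum_push (W i) W1 W2); auto.
Qed.

Lemma chi2_push_spec i : (i < n)%nat -> summable (chi2_term (PX i) (QX i)) ->
  has_sum (chi2_term (push (PX i) (W i)) (push (QX i) (W i))) (chi2 (push (PX i) (W i)) (push (QX i) (W i)))
  /\ 0 <= chi2 (push (PX i) (W i)) (push (QX i) (W i)) <= chi2 (PX i) (QX i).
Proof.
  intros Hi. apply (has_sum_chi2_push (W i) (channel_nonneg i Hi) (channel_sum_1 i Hi));
    [apply (HP i Hi) | apply (HQ i Hi) | apply (HP i Hi) | apply (HQ i Hi)].
Qed.

Lemma has_sum_sqratio_input lam : (forall i, (i < n)%nat -> summable (chi2_term (PX i) (QX i))) ->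
  has_sum (sqratio_term (prodP n (mix lam)) (prodP n QX))
          (prodn n (fun i => 1 + lam ^ 2 * chi2 (PX i) (QX i))).
Proof.
  intros Hs. apply has_sum_sqratio_prodP. intros i Hi.
  destruct (HP i Hi) as [P0 P1], (HQ i Hi) as [Q0 Q1].
  split; [intros; apply Rlt_le; auto|].
  apply has_sum_sqratio_mix; auto; [intros y E; specialize (Q0 y); lra | apply has_sum_Sum; auto].
Qed.

Lemma has_sum_sqratio_output lam : 0 <= lam <= 1 ->
  (forall i, (i < n)%nat -> summable (chi2_term (PX i) (QX i))) ->
  has_sum (sqratio_term (push (prodP n (mix lam)) (prodCh n W)) (push (prodP n QX) (prodCh n W)))
          (prodn n (fun i => 1 + lam ^ 2 * chi2 (push (PX i) (W i)) (push (QX i) (W i)))).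
Proof.
  intros Hl Hs.
  assert (Hpmf : forall (r : nat -> X -> R), (forall i, (i < n)%nat -> pmf_full (r i)) ->
            forall i, (i < n)%nat -> (forall a, 0 <= r i a) /\ has_sum (r i) 1).
  { intros r Hr i Hi. destruct (Hr i Hi) as [H1 H2]. split; auto. intros; apply Rlt_le; auto. }
  apply (has_sum_ext (sqratio_term (prodP n (fun i => push (mix lam i) (W i)))
                                   (prodP n (fun i => push (QX i) (W i))))).
  { intros y. unfold sqratio_term.
    rewrite (push_prodP (mix lam)), (push_prodP QX); auto; apply Hpmf; auto.
    intros; apply mix_pmf; auto. }
  apply has_sum_sqratio_prodP. intros i Hi.
  pose proof (channel_nonneg i Hi) as W1. pose proof (channel_sum_1 i Hi) as W2.
  destruct (HP i Hi) as [P0 P1], (HQ i Hi) as [Q0 Q1].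
  assert (Q0' : forall a, 0 <= QX i a) by (intros; apply Rlt_le; auto).
  assert (P0' : forall a, 0 <= PX i a) by (intros; apply Rlt_le; auto).
  split; [intros; apply (push_nonneg (W i) W1 W2); auto|].
  apply (has_sum_ext (sqratio_term (fun y => lam * push (PX i) (W i) y + (1 - lam) * push (QX i) (W i) y)
                                   (push (QX i) (W i)))).
  { intros y. unfold sqratio_term, mix. rewrite push_affine; auto. }
  apply has_sum_sqratio_mix; try apply has_sum_push_1; auto.
  - intros y. apply (push_eq_0 (W i) W1 W2 (QX i) (PX i)); auto.
  - apply chi2_push_spec; auto.
Qed.

Definition chi2_prod_gap (lam : R) : R :=
  prodn n (fun i => 1 + lam ^ 2 * chi2 (PX i) (QX i))
  - prodn n (fun i => 1 + lam ^ 2 * chi2 (push (PX i) (W i)) (push (QX i) (W i))).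

Definition chi2_sum_gap : R :=
  sumn n (fun i => chi2 (PX i) (QX i) - chi2 (push (PX i) (W i)) (push (QX i) (W i))).

Lemma chi2_gaps_ordered lam : (forall i, (i < n)%nat -> summable (chi2_term (PX i) (QX i))) ->
  lam ^ 2 * chi2_sum_gap <= chi2_prod_gap lam /\ 0 <= lam ^ 2 * chi2_sum_gap.
Proof.
  intros Hs. apply prodn_sub_ge_sumn; [|apply pow2_ge_0].
  intros i Hi. apply (chi2_push_spec i Hi (Hs i Hi)).
Qed.

Section Divergence.
Variables f f1 f2 : R -> R.
Hypothesis Hconv : convex_pos f.
Hypothesis Hf1 : forall t, 0 < t -> derivable_pt_lim f t (f1 t).
Hypothesis Hf2 : forall t, 0 < t -> derivable_pt_lim f1 t (f2 t).

Definition Df_gap (lam : R) : R :=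
  Df f (prodP n (mix lam)) (prodP n QX)
  - Df f (push (prodP n (mix lam)) (prodCh n W)) (push (prodP n QX) (prodCh n W)).

Definition c_lam (lam : R) : R := c_f f2 (xi1 n PX QX lam) (xi2 n PX QX lam).
Definition e_lam (lam : R) : option R := e_f f2 (xi1 n PX QX lam) (xi2 n PX QX lam).

Lemma Df_gap_bound lam kap sig : 0 <= lam <= 1 ->
  (forall i, (i < n)%nat -> summable (chi2_term (PX i) (QX i))) ->
  summable (Df_term f (prodP n (mix lam)) (prodP n QX)) ->
  (sig = 1 \/ sig = -1) ->
  (forall t, inI (xi1 n PX QX lam) (xi2 n PX QX lam) t -> 0 <= sig * (f2 t - 2 * kap)) ->
  0 <= sig * (Df_gap lam - kap * chi2_prod_gap lam).
Proof.
  intros Hl Hs HD Hsig Hpos.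
  apply (Df_gap_sqratio (prodCh n W) prodCh_nonneg has_sum_prodCh (prodP n QX) (prodP n (mix lam))
           (xi1 n PX QX lam) (xi2 n PX QX lam)) with (f1 := f1) (f2 := f2); auto.
  - intros; apply prodP_pos. intros; apply (HQ i H).
  - intros; apply Rlt_le, prodP_pos. intros; apply mix_pos; auto.
  - apply has_sum_prodP_1; auto.
  - apply has_sum_prodP_1. intros; apply mix_pmf; auto.
  - intros; apply prodP_ratio_inI; auto.
  - apply inI_xi_1; auto.
  - apply has_sum_Sum; auto.
  - apply has_sum_sqratio_input; auto.
  - apply has_sum_sqratio_output; auto.
Qed.

Lemma f2_values_inhabited lam : 0 <= lam <= 1 ->
  exists v, f2_values f2 (xi1 n PX QX lam) (xi2 n PX QX lam) v.
Proof. intros Hl. exists (f2 1), 1. split; auto. apply inI_xi_1; auto. Qed.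

Lemma c_lam_spec lam : 0 <= lam <= 1 ->
  0 <= c_lam lam /\ (forall t, inI (xi1 n PX QX lam) (xi2 n PX QX lam) t -> c_lam lam <= f2 t / 2).
Proof.
  intros Hl. unfold c_lam, c_f.
  assert (Hnn : forall v, f2_values f2 (xi1 n PX QX lam) (xi2 n PX QX lam) v -> 0 <= v).
  { intros v [t [Ht ->]]. apply (convex_second_derivative_nonneg f f1); auto. apply Ht. }
  destruct (Inf_spec _ (f2_values_inhabited lam Hl) (ex_intro _ 0 Hnn)) as [H1 H2].
  split; [pose proof (H2 0 Hnn); lra|].
  intros t Ht. assert (Inf (f2_values f2 (xi1 n PX QX lam) (xi2 n PX QX lam)) <= f2 t)
    by (apply H1; exists t; auto). lra.
Qed.

Lemma e_lam_spec lam ef : 0 <= lam <= 1 -> e_lam lam = Some ef ->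
  forall t, inI (xi1 n PX QX lam) (xi2 n PX QX lam) t -> f2 t / 2 <= ef.
Proof.
  intros Hl He t Ht. unfold e_lam, e_f in He.
  destruct (Sup (f2_values f2 (xi1 n PX QX lam) (xi2 n PX QX lam))) as [s|] eqn:Es; [|discriminate].
  injection He as <-. destruct (Sup_Some_is_lub _ _ (f2_values_inhabited lam Hl) Es) as [H1 _].
  assert (f2 t <= s) by (apply H1; exists t; auto). lra.
Qed.

Lemma Df_gap_lower_bounds lam : 0 <= lam <= 1 ->
  (forall i, (i < n)%nat -> summable (chi2_term (PX i) (QX i))) ->
  summable (Df_term f (prodP n (mix lam)) (prodP n QX)) ->
  Df_gap lam >= c_lam lam * chi2_prod_gap lam /\
  c_lam lam * chi2_prod_gap lam >= c_lam lam * lam ^ 2 * chi2_sum_gap /\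
  c_lam lam * lam ^ 2 * chi2_sum_gap >= 0.
Proof.
  intros Hl Hs HD.
  destruct (c_lam_spec lam Hl) as [Hc0 Hc].
  pose proof (Df_gap_bound lam (c_lam lam) 1 Hl Hs HD (or_introl eq_refl)) as G.
  destruct (chi2_gaps_ordered lam Hs) as [I1 I2].
  rewrite Rmult_assoc. split; [|split].
  - enough (0 <= 1 * (Df_gap lam - c_lam lam * chi2_prod_gap lam)) by lra.
    apply G. intros t Ht. specialize (Hc t Ht). lra.
  - apply Rle_ge, Rmult_le_compat_l; auto.
  - apply Rle_ge, Rmult_le_pos; auto.
Qed.

Lemma Df_gap_upper_bound lam : 0 <= lam <= 1 ->
  (forall i, (i < n)%nat -> summable (chi2_term (PX i) (QX i))) ->
  summable (Df_term f (prodP n (mix lam)) (prodP n QX)) ->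
  forall ef, e_lam lam = Some ef -> Df_gap lam <= ef * chi2_prod_gap lam.
Proof.
  intros Hl Hs HD ef He.
  enough (0 <= -1 * (Df_gap lam - ef * chi2_prod_gap lam)) by lra.
  apply Df_gap_bound; auto.
  intros t Ht. pose proof (e_lam_spec lam ef Hl He t Ht). lra.
Qed.

Section SmallLambda.
Hypothesis Hf2_cont : continuity_pt f2 1.
Hypothesis Hsup : forall i, (i < n)%nat -> Sup (ratio_set (PX i) (QX i)) <> None.

(* The default [1] is never used under [Hsup]. *)
Definition ratio_sup (i : nat) : R :=
  match Sup (ratio_set (PX i) (QX i)) with Some s => s | None => 1 end.

Lemma Sup_ratio_set i : (i < n)%nat -> Sup (ratio_set (PX i) (QX i)) = Some (ratio_sup i).
Proof. intros Hi. unfold ratio_sup. destruct (Sup _) eqn:E; auto. exfalso; apply (Hsup i Hi E). Qed.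

Lemma xi2_Some lam : xi2 n PX QX lam = Some (prodn n (fun i => 1 - lam + lam * ratio_sup i)).
Proof. apply oprodn_all_Some. intros i Hi. rewrite (Sup_ratio_set i Hi). auto. Qed.

Lemma chi2_summable i : (i < n)%nat -> summable (chi2_term (PX i) (QX i)).
Proof.
  intros Hi. destruct (ratio_sup_spec i (ratio_sup i) Hi (Sup_ratio_set i Hi)) as [S1 S2].
  destruct (HQ i Hi) as [Q0 Q1], (HP i Hi) as [P0 _].
  apply (summable_dominated _ (fun x => (ratio_sup i + 1) ^ 2 * QX i x) ((ratio_sup i + 1) ^ 2 * 1));
    [|apply has_sum_scal; auto].
  intros x. specialize (S1 x). specialize (Q0 x). pose proof (ratio_pos i x Hi).
  unfold chi2_term. destruct (Req_dec_T (QX i x) 0); [lra|].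
  replace ((PX i x - QX i x) ^ 2 / QX i x) with (QX i x * (PX i x / QX i x - 1) ^ 2) by (field; auto).
  rewrite Rabs_pos_eq by (apply Rmult_le_pos; [lra | apply pow2_ge_0]).
  rewrite Rmult_comm. apply Rmult_le_compat_r; [lra | nra].
Qed.

(* On [I = [xi1, xi2]] with [0 < xi1] the convex [f] is bounded, which dominates [Q f(R/Q)] by [M Q]. *)
Lemma Df_term_summable lam : 0 <= lam < 1 ->
  summable (Df_term f (prodP n (mix lam)) (prodP n QX)).
Proof.
  intros Hl.
  set (hi := prodn n (fun i => 1 - lam + lam * ratio_sup i)).
  assert (Hlo : 0 < xi1 n PX QX lam).
  { rewrite xi1_eq. apply prodn_pos. intros i Hi. destruct (ratio_inf_spec i Hi) as [M0 _]. nra. }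
  assert (Hle : xi1 n PX QX lam <= hi).
  { pose proof (xi1_bounds lam ltac:(lra)). pose proof (xi2_ge_1 lam hi ltac:(lra) (xi2_Some lam)). lra. }
  destruct (convex_bounded_on_segment f f1 Hconv (xi1 n PX QX lam) hi ltac:(lra) (Hf1 1 ltac:(lra)))
    as [M HM].
  apply (summable_dominated _ (fun x => M * prodP n QX x) (M * 1));
    [|apply has_sum_scal, has_sum_prodP_1; auto].
  intros x. pose proof (prodP_ratio_inI lam x ltac:(lra)) as [H0 [H1 H2]].
  rewrite xi2_Some in H2. fold hi in H2.
  assert (Hq : 0 < prodP n QX x) by (apply prodP_pos; intros; apply (HQ i H)).
  rewrite Df_term_pos, Rabs_mult, Rabs_pos_eq, Rmult_comm by lra.
  apply Rmult_le_compat_r; [lra | apply HM; lra].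
Qed.

Lemma inI_xi_near_1 rho : 0 < rho -> exists d, 0 < d /\ forall lam, 0 < lam < d ->
  forall t, inI (xi1 n PX QX lam) (xi2 n PX QX lam) t -> Rabs (t - 1) < rho.
Proof.
  intros Hrho.
  destruct (lim0plus_prodn_affine n (fun i => ratio_inf i - 1) rho Hrho) as [d1 [Hd1 H1]].
  destruct (lim0plus_prodn_affine n (fun i => ratio_sup i - 1) rho Hrho) as [d2 [Hd2 H2]].
  exists (Rmin d1 d2); split; [apply Rmin_glb_lt; auto|].
  intros lam Hlam t [_ [T1 T2]]. pose proof (Rmin_l d1 d2). pose proof (Rmin_r d1 d2).
  specialize (H1 lam ltac:(lra)). specialize (H2 lam ltac:(lra)).
  rewrite xi1_eq in T1. rewrite xi2_Some in T2.
  rewrite (prodn_ext n _ (fun i => 1 + lam * (ratio_inf i - 1))) in T1 by (intros; ring).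
  rewrite (prodn_ext n _ (fun i => 1 + lam * (ratio_sup i - 1))) in T2 by (intros; ring).
  apply Rabs_def2 in H1. apply Rabs_def2 in H2. apply Rabs_def1; lra.
Qed.

Lemma f2_near_on_inI eta : 0 < eta -> exists d, 0 < d /\ forall lam, 0 < lam < d ->
  0 <= lam <= 1 /\ forall t, inI (xi1 n PX QX lam) (xi2 n PX QX lam) t -> Rabs (f2 t - f2 1) < eta.
Proof.
  intros He. destruct (Hf2_cont eta He) as [rho [Hrho Hf]].
  destruct (inI_xi_near_1 rho Hrho) as [d [Hd Hnear]].
  exists (Rmin 1 d); split; [apply Rmin_glb_lt; lra|].
  intros lam Hl. pose proof (Rmin_l 1 d). pose proof (Rmin_r 1 d). split; [lra|].
  intros t Ht. destruct (Req_dec t 1) as [->|Hne]; [rewrite Rminus_diag, Rabs_R0; auto|].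
  apply (Hf t). split; [split; [exact I | auto] | apply (Hnear lam); auto; lra].
Qed.

Lemma lim0plus_c_lam : lim0plus c_lam (/ 2 * f2 1).
Proof.
  intros eta He. destruct (f2_near_on_inI eta He) as [d [Hd Hnear]]. exists d; split; auto.
  intros lam Hlam. destruct (Hnear lam Hlam) as [Hl Hf].
  unfold c_lam, c_f.
  assert (Hnn : forall v, f2_values f2 (xi1 n PX QX lam) (xi2 n PX QX lam) v -> 0 <= v).
  { intros v [t [Ht ->]]. apply (convex_second_derivative_nonneg f f1); auto. apply Ht. }
  destruct (Inf_spec _ (f2_values_inhabited lam Hl) (ex_intro _ 0 Hnn)) as [G1 G2].
  assert (Inf (f2_values f2 (xi1 n PX QX lam) (xi2 n PX QX lam)) <= f2 1)
    by (apply G1; exists 1; split; auto; apply inI_xi_1; auto).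
  assert (f2 1 - eta <= Inf (f2_values f2 (xi1 n PX QX lam) (xi2 n PX QX lam))).
  { apply G2. intros v [t [Ht ->]]. specialize (Hf t Ht). apply Rabs_def2 in Hf. lra. }
  apply Rabs_def1; lra.
Qed.

Lemma e_lam_near eta : 0 < eta -> exists d, 0 < d /\ forall lam, 0 < lam < d ->
  exists ef, e_lam lam = Some ef /\ Rabs (ef - / 2 * f2 1) < eta.
Proof.
  intros He. destruct (f2_near_on_inI eta He) as [d [Hd Hnear]]. exists d; split; auto.
  intros lam Hlam. destruct (Hnear lam Hlam) as [Hl Hf].
  unfold e_lam, e_f.
  destruct (Sup_bounded (f2_values f2 (xi1 n PX QX lam) (xi2 n PX QX lam)) (f2_values_inhabited lam Hl))
    as [s [Es [G1 G2]]].
  { exists (f2 1 + eta). intros v [t [Ht ->]]. specialize (Hf t Ht). apply Rabs_def2 in Hf. lra. }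
  rewrite Es. exists (/ 2 * s). split; auto.
  assert (f2 1 <= s) by (apply G1; exists 1; split; auto; apply inI_xi_1; auto).
  assert (s <= f2 1 + eta).
  { apply G2. intros v [t [Ht ->]]. specialize (Hf t Ht). apply Rabs_def2 in Hf. lra. }
  apply Rabs_def1; lra.
Qed.

Definition e_val (lam : R) : R := match e_lam lam with Some v => v | None => 0 end.

Lemma e_lam_Some_near : exists d, 0 < d /\ forall lam, 0 < lam < d -> e_lam lam = Some (e_val lam).
Proof.
  destruct (e_lam_near 1 ltac:(lra)) as [d [Hd H]]. exists d; split; auto.
  intros lam Hl. destruct (H lam Hl) as [ef [E _]]. unfold e_val. rewrite E; auto.
Qed.

Lemma lim0plus_e_val : lim0plus e_val (/ 2 * f2 1).
Proof.
  intros eta He. destruct (e_lam_near eta He) as [d [Hd H]]. exists d; split; auto.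
  intros lam Hl. destruct (H lam Hl) as [ef [E Hef]]. unfold e_val. rewrite E; auto.
Qed.

Lemma lim0plus_chi2_prod_gap : lim0plus (fun lam => chi2_prod_gap lam / lam ^ 2) chi2_sum_gap.
Proof. apply lim0plus_prodn_gap. Qed.

Lemma Df_gap_limits :
  lim0plus (fun lam => Df_gap lam / lam ^ 2) (/ 2 * f2 1 * chi2_sum_gap) /\
  lim0plus (fun lam => c_lam lam * chi2_prod_gap lam / lam ^ 2) (/ 2 * f2 1 * chi2_sum_gap) /\
  lim0plus (fun lam => c_lam lam * lam ^ 2 * chi2_sum_gap / lam ^ 2) (/ 2 * f2 1 * chi2_sum_gap) /\
  lim0plus_opt (fun lam => match e_lam lam with
                           | Some ef => Some (ef * chi2_prod_gap lam / lam ^ 2)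
                           | None => None end) (/ 2 * f2 1 * chi2_sum_gap).
Proof.
  assert (Hdiv : forall a lam, 0 < lam -> a * chi2_prod_gap lam / lam ^ 2 = a * (chi2_prod_gap lam / lam ^ 2))
    by (intros; field; lra).
  pose proof (lim0plus_mult _ _ _ _ lim0plus_c_lam lim0plus_chi2_prod_gap) as Hc.
  pose proof (lim0plus_mult _ _ _ _ lim0plus_e_val lim0plus_chi2_prod_gap) as He.
  destruct e_lam_Some_near as [d [Hd HSome]].
  split; [|split; [|split]].
  - eapply lim0plus_squeeze; [|exact Hc | exact He].
    exists (Rmin d 1). split; [apply Rmin_glb_lt; lra|].
    intros lam Hl. pose proof (Rmin_l d 1). pose proof (Rmin_r d 1).
    assert (Hl' : 0 <= lam <= 1) by lra.
    assert (Hp : 0 < lam ^ 2) by (apply pow_lt; lra).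
    destruct (Df_gap_lower_bounds lam Hl' chi2_summable (Df_term_summable lam ltac:(lra))) as [A _].
    pose proof (Df_gap_upper_bound lam Hl' chi2_summable (Df_term_summable lam ltac:(lra))
                  (e_val lam) (HSome lam ltac:(lra))) as B.
    rewrite <- !Hdiv by lra. unfold Rdiv.
    split; apply Rmult_le_compat_r; try (apply Rlt_le, Rinv_0_lt_compat; auto); lra.
  - apply (lim0plus_eq_near (fun lam => c_lam lam * (chi2_prod_gap lam / lam ^ 2))); auto.
    exists 1; split; [lra|]. intros; symmetry; apply Hdiv; lra.
  - apply (lim0plus_eq_near (fun lam => c_lam lam * chi2_sum_gap));
      [|apply lim0plus_mult; [apply lim0plus_c_lam | apply lim0plus_const]].
    exists 1; split; [lra|]. intros; field; lra.
  - apply (lim0plus_opt_of_near _ (fun lam => e_val lam * (chi2_prod_gap lam / lam ^ 2))); auto.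
    exists d; split; auto. intros lam Hl. rewrite HSome, Hdiv by lra; auto.
Qed.

End SmallLambda.

End Divergence.

End ProductSetting.

Theorem theorem2 (X Y : Type) (n : nat)
  (PX QX : nat -> X -> R) (W : nat -> X -> Y -> R) (f f1 f2 : R -> R)
  (HXc : countable X) (HYc : countable Y)
  (HP : forall i, (i < n)%nat -> pmf_full (PX i))
  (HQ : forall i, (i < n)%nat -> pmf_full (QX i))
  (HW : forall i, (i < n)%nat -> stochastic (W i))
  (Hconv : convex_pos f)
  (Hf1 : forall t, 0 < t -> derivable_pt_lim f t (f1 t))
  (Hf2 : forall t, 0 < t -> derivable_pt_lim f1 t (f2 t))
  (Hf0 : f 1 = 0) :
  let RX := fun lam : R => prodP n (fun i x => lam * PX i x + (1 - lam) * QX i x) in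
  let QXn := prodP n QX in
  let Wn := prodCh n W in
  let RY := fun lam : R => push (RX lam) Wn in
  let QY := push QXn Wn in
  let PYi := fun i => push (PX i) (W i) in
  let QYi := fun i => push (QX i) (W i) in
  let gap := fun lam : R => Df f (RX lam) QXn - Df f (RY lam) QY in
  let B := fun lam : R =>
    prodn n (fun i => 1 + lam ^ 2 * chi2 (PX i) (QX i))
    - prodn n (fun i => 1 + lam ^ 2 * chi2 (PYi i) (QYi i)) in
  let S := sumn n (fun i => chi2 (PX i) (QX i) - chi2 (PYi i) (QYi i)) in
  let c := fun lam : R => c_f f2 (xi1 n PX QX lam) (xi2 n PX QX lam) in
  let e := fun lam : R => e_f f2 (xi1 n PX QX lam) (xi2 n PX QX lam) in
  (forall lam, 0 <= lam <= 1 ->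
     (forall i, (i < n)%nat -> summable (chi2_term (PX i) (QX i))) ->
     summable (Df_term f (RX lam) QXn) ->
     gap lam >= c lam * B lam /\
     c lam * B lam >= c lam * lam ^ 2 * S /\
     c lam * lam ^ 2 * S >= 0) /\
  (* [e lam = None] encodes [e_f = +oo], for which (b) is trivial. *)
  (forall lam, 0 <= lam <= 1 ->
     (forall i, (i < n)%nat -> summable (chi2_term (PX i) (QX i))) ->
     summable (Df_term f (RX lam) QXn) ->
     forall ef, e lam = Some ef -> gap lam <= ef * B lam) /\
  (continuity_pt f2 1 ->
   (forall i, (i < n)%nat -> Sup (ratio_set (PX i) (QX i)) <> None) ->
     lim0plus (fun lam => gap lam / lam ^ 2) (/ 2 * f2 1 * S) /\
     lim0plus (fun lam => c lam * B lam / lam ^ 2) (/ 2 * f2 1 * S) /\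
     lim0plus (fun lam => c lam * lam ^ 2 * S / lam ^ 2) (/ 2 * f2 1 * S) /\
     lim0plus_opt (fun lam => match e lam with
                              | Some ef => Some (ef * B lam / lam ^ 2)
                              | None => None end) (/ 2 * f2 1 * S)).
Proof.
  intros RX QXn Wn RY QY PYi QYi gap B S c e.
  split; [|split].
  - exact (Df_gap_lower_bounds X Y n PX QX W HP HQ HW f f1 f2 Hconv Hf1 Hf2).
  - exact (Df_gap_upper_bound X Y n PX QX W HP HQ HW f f1 f2 Hf1 Hf2).
  - intros Hf2_cont Hsup. exact (Df_gap_limits X Y n PX QX W HP HQ HW f f1 f2 Hconv Hf1 Hf2 Hf2_cont Hsup).
Qed.
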